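(* For every integer $l\ge0$ there is a constant $C_l$, depending only on $l,N,r,R$ (and the choice of $\varphi_1$), such that for all integers $k\ge0$ and all $n\in\mathbb{Z}^N$, $$\sum_{j\in\mathbb{Z},\ k\le\sqrt{j}<k+1}|(\Theta_j)_n|^2\le\frac{C_l}{(1+||n|-k|)^l}.$$
   Context: Let $N\ge2$ and $0<r<R\le\pi$. $T^N=(-\pi,\pi]^N$, and functions on $T^N$ are identified with $2\pi$-periodic functions on $\mathbb{R}^N$. Let $\varphi_1:[0,\infty)\to\mathbb{R}$ be a smooth function with $\chi_{(R-r)/3}\le\varphi_1\le\chi_{2(R-r)/3}$, where $\chi_b$ is the characteristic function of $[0,b]$. Put $\varphi_2=1-\varphi_1$, and let $\psi(x)=\varphi_2(|x|)$ for $x\in T^N$, extended $2\pi$-periodically in each variable. Let $\psi_m=(2\pi)^{-N}\int_{T^N}\psi(x)e^{-imx}dx$ be its Fourier coefficients. For $\lambda>0$, let $\theta(x,\lambda)=(2\pi)^{-N}\sum_{|m|^2<\lambda}e^{imx}$. For integers $k\ge0$, let $\theta_k(x)=\theta(x,k)\psi(x)$ and $\Theta_j=\theta_{j+1}-\theta_j$. Let $(\Theta_j)_n=(2\pi)^{-N}\int_{T^N}\Theta_j(x)e^{-inx}dx$; equivalently, $(\Theta_j)_n=(2\pi)^{-N}\sum_{m\in\mathbb{Z}^N,\,|n-m|^2=j}\psi_m$, which is $0$ if there is no such $m$. *)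

From Stdlib Require Import Reals ZArith List ClassicalEpsilon.
Import ListNotations.
Open Scope R_scope.

Definition smooth_on (D : R -> Prop) (f : R -> R) : Prop :=
  exists F : nat -> R -> R,
    (forall x, F 0%nat x = f x) /\
    (forall (k : nat) (x : R), D x -> derivable_pt_lim (F k) x (F (S k) x)).

(** characteristic function of [0,b] (used for arguments t >= 0) *)
Definition chi (b t : R) : R := if Rle_dec t b then 1 else 0.

(** total Riemann integral: RiemannInt if integrable, 0 otherwise *)
Definition RInt_tot (f : R -> R) (a b : R) : R :=
  match excluded_middle_informative (exists pr : Riemann_integrable f a b, True) with
  | left H => RiemannInt (proj1_sig (constructive_indefinite_description _ H))
  | right _ => 0
  end.

(** iterated integral over the cube [-pi,pi]^n of f : R^n -> R
    (points of R^n are lists of length n) *)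
Fixpoint integ_cube (n : nat) (f : list R -> R) : R :=
  match n with
  | O => f nil
  | S n' => RInt_tot (fun t => integ_cube n' (fun xs => f (t :: xs))) (- PI) PI
  end.

Definition euclid_norm (x : list R) : R :=
  sqrt (fold_right (fun a s => a * a + s) 0 x).
Definition euclid_normZ (m : list Z) : R := euclid_norm (map IZR m).
Definition dotZR (m : list Z) (x : list R) : R :=
  fold_right Rplus 0 (map (fun p => IZR (fst p) * snd p) (combine m x)).

(** lattice points of the box [-K,K]^N (without repetitions) *)
Fixpoint box (N K : nat) : list (list Z) :=
  match N with
  | O => [nil]
  | S N' => flat_map (fun z => map (cons z) (box N' K))
              (map (fun i => (Z.of_nat i - Z.of_nat K)%Z) (seq 0 (2 * K + 1)))
  end.

Definition sqnormZ (m : list Z) : Z := fold_right (fun a s => a * a + s)%Z 0%Z m.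

(** {m in Z^N : |m|^2 < k}  (all such m lie in [-k,k]^N) *)
Definition ball (N k : nat) : list (list Z) :=
  filter (fun m => Z.ltb (sqnormZ m) (Z.of_nat k)) (box N k).

(** complex numbers as pairs (re, im) *)
Definition Cx := (R * R)%type.
Definition Cadd (z w : Cx) : Cx := (fst z + fst w, snd z + snd w).
Definition Csub (z w : Cx) : Cx := (fst z - fst w, snd z - snd w).
Definition Cmul (z w : Cx) : Cx :=
  (fst z * fst w - snd z * snd w, fst z * snd w + snd z * fst w).
Definition Cscal (a : R) (z : Cx) : Cx := (a * fst z, a * snd z).
Definition Cexpi (t : R) : Cx := (cos t, sin t).
Definition Cnorm2 (z : Cx) : R := fst z * fst z + snd z * snd z.
Definition Csum (l : list Cx) : Cx := fold_right Cadd (0, 0) l.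

Definition theta (N k : nat) (x : list R) : Cx :=
  Cscal (/ (2 * PI) ^ N) (Csum (map (fun m => Cexpi (dotZR m x)) (ball N k))).

Definition psi (phi1 : R -> R) (x : list R) : R := 1 - phi1 (euclid_norm x).

Definition theta_k (N : nat) (phi1 : R -> R) (k : nat) (x : list R) : Cx :=
  Cscal (psi phi1 x) (theta N k x).
Definition Theta (N : nat) (phi1 : R -> R) (j : nat) (x : list R) : Cx :=
  Csub (theta_k N phi1 (S j) x) (theta_k N phi1 j x).

Definition Theta_coef (N : nat) (phi1 : R -> R) (j : nat) (n : list Z) : Cx :=
  let g := fun x => Cmul (Theta N phi1 j x) (Cexpi (- dotZR n x)) in
  Cscal (/ (2 * PI) ^ N)
    (integ_cube N (fun x => fst (g x)), integ_cube N (fun x => snd (g x))).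

(** the integers j (necessarily >= 0) with k <= sqrt j < k+1;
    all of them are < (k+1)^2 *)
Definition shell (k : nat) : list nat :=
  filter (fun j => if Rle_dec (INR k) (sqrt (INR j)) then
                     if Rlt_dec (sqrt (INR j)) (INR k + 1) then true else false
                   else false)
         (seq 0 ((k + 1) * (k + 1))).

Definition Rsum (l : list R) : R := fold_right Rplus 0 l.

(* The Fourier coefficient (Theta_j)_n is (2 pi)^-N times the sum, over the lattice points m with
   |m|^2 = j, of the Fourier coefficients of psi at n - m.  Since psi = 1 - phi1 (|x|) and
   phi1 (|x|) is smooth with support inside the open cube, those coefficients decay faster than
   any power of 1 + |m - n|_oo: for h = pi / p_i, translating by h in the i-th coordinate flips the
   sign of e^{ipx}, so the integral is half that of the finite difference Delta_h, and L such steps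
   give a factor (|h| / 2)^L times a bound for the L-th derivative of phi1 (|x|) along coordinate
   lines.  For k <= |m| < k + 1 we have 1 + ||n| - k| <= (N + 2) (1 + |m - n|_oo), and
   sum_m (1 + |m - n|_oo)^-2N is bounded independently of n; summing over the shell and using
   sum_j a_j^2 <= (sum_j a_j)^2 gives the estimate. *)

From Stdlib Require Import Reals ZArith List Lra Lia Psatz ClassicalEpsilon FunctionalExtensionality.
From Coquelicot Require Import Coquelicot.
Import ListNotations.
Open Scope R_scope.

(** * Lipschitz functions and the iterated integral *)

Lemma RInt_tot_RInt f a b : ex_RInt f a b -> RInt_tot f a b = RInt f a b.
Proof.
  intros H. unfold RInt_tot. destruct excluded_middle_informative as [e|n].
  - destruct (constructive_indefinite_description _ e) as [pr Hpr]. simpl.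
    symmetry. apply RInt_Reals.
  - exfalso. apply n. exists (ex_RInt_Reals_0 _ _ _ H). exact I.
Qed.

Lemma two_PI_pos : 0 < 2 * PI.
Proof. pose proof PI_RGT_0. lra. Qed.

Lemma lipschitz_continuous (f : R -> R) K x :
  0 <= K -> (forall s t, Rabs (f s - f t) <= K * Rabs (s - t)) -> continuous f x.
Proof.
  intros HK H. apply continuity_pt_filterlim.
  intros eps Heps. exists (eps / (K + 1)). split.
  - apply Rdiv_lt_0_compat; lra.
  - intros y [_ Hy]. simpl in *. unfold R_dist in *.
    eapply Rle_lt_trans. apply H.
    apply Rle_lt_trans with (K * (eps / (K + 1))).
    + apply Rmult_le_compat_l; lra.
    + apply Rlt_le_trans with ((K + 1) * (eps / (K + 1))).
      * apply Rmult_lt_compat_r; [apply Rdiv_lt_0_compat|]; lra.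
      * right. field. lra.
Qed.

Lemma ex_RInt_lipschitz (f : R -> R) K a b :
  0 <= K -> (forall s t, Rabs (f s - f t) <= K * Rabs (s - t)) -> ex_RInt f a b.
Proof.
  intros HK H. apply (ex_RInt_continuous (V:=R_CompleteNormedModule)).
  intros z _. exact (lipschitz_continuous f K z HK H).
Qed.

Lemma derivable_lipschitz (f f' : R -> R) M :
  (forall t, derivable_pt_lim f t (f' t)) -> (forall t, Rabs (f' t) <= M) ->
  forall a b, Rabs (f a - f b) <= M * Rabs (a - b).
Proof.
  intros Hd HM a b.
  destruct (Rtotal_order a b) as [H|[H|H]].
  - destruct (MVT_cor2 f f' a b H (fun c _ => Hd c)) as [c [Hc _]].
    rewrite <- Rabs_Ropp, Ropp_minus_distr, Hc, Rabs_mult, <- (Rabs_Ropp (a - b)),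
      Ropp_minus_distr.
    apply Rmult_le_compat_r; auto using Rabs_pos.
  - subst. rewrite !Rminus_diag, Rabs_R0. lra.
  - destruct (MVT_cor2 f f' b a H (fun c _ => Hd c)) as [c [Hc _]].
    rewrite Hc, Rabs_mult. apply Rmult_le_compat_r; auto using Rabs_pos.
Qed.

Fixpoint l1_dist (x y : list R) : R :=
  match x, y with a :: x', b :: y' => Rabs (a - b) + l1_dist x' y' | _, _ => 0 end.

Lemma l1_dist_nonneg x y : 0 <= l1_dist x y.
Proof.
  revert y; induction x as [|a x IH]; intros [|b y]; simpl; try lra.
  pose proof (IH y). pose proof (Rabs_pos (a - b)). lra.
Qed.

Lemma l1_dist_refl x : l1_dist x x = 0.
Proof. induction x as [|a x IH]; simpl; auto. rewrite IH, Rminus_diag, Rabs_R0. ring. Qed.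

Lemma l1_dist_sym x y : l1_dist x y = l1_dist y x.
Proof.
  revert y; induction x as [|a x IH]; intros [|b y]; simpl; auto.
  rewrite IH, Rabs_minus_sym. reflexivity.
Qed.

Lemma l1_dist_cons t x y : l1_dist (t :: x) (t :: y) = l1_dist x y.
Proof. simpl. rewrite Rminus_diag, Rabs_R0. ring. Qed.

(* Lipschitz bounds make every slice of an iterated integral continuous, hence Riemann integrable,
   and they are preserved by all the operations used below. *)
Definition lip_bounded n (f : list R -> R) K B := 0 <= K /\
  (forall x, length x = n -> Rabs (f x) <= B) /\
  (forall x y, length x = n -> length y = n -> Rabs (f x - f y) <= K * l1_dist x y).

Lemma lip_bounded_bound_nonneg n f K B : lip_bounded n f K B -> 0 <= B.
Proof.
  intros [_ [HB _]]. specialize (HB (repeat 0 n) (repeat_length 0 n)).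
  pose proof (Rabs_pos (f (repeat 0 n))). lra.
Qed.

Lemma lip_bounded_rebound n f K B B' :
  lip_bounded n f K B -> (forall x, length x = n -> Rabs (f x) <= B') -> lip_bounded n f K B'.
Proof. intros [HK [_ Hf]] HB. split; auto. Qed.

Lemma lip_bounded_const n c : lip_bounded n (fun _ => c) 0 (Rabs c).
Proof.
  split; [lra|split]; intros; [lra|].
  rewrite Rminus_diag, Rabs_R0. pose proof (l1_dist_nonneg x y). lra.
Qed.

Lemma lip_bounded_plus n f g K1 B1 K2 B2 :
  lip_bounded n f K1 B1 -> lip_bounded n g K2 B2 ->
  lip_bounded n (fun x => f x + g x) (K1 + K2) (B1 + B2).
Proof.
  intros [a0 [a1 a2]] [b0 [b1 b2]]; split; [lra|split].
  - intros x Hx. eapply Rle_trans; [apply Rabs_triang|].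
    specialize (a1 x Hx); specialize (b1 x Hx); lra.
  - intros x y Hx Hy.
    replace (f x + g x - (f y + g y)) with ((f x - f y) + (g x - g y)) by ring.
    eapply Rle_trans; [apply Rabs_triang|].
    specialize (a2 x y Hx Hy); specialize (b2 x y Hx Hy); lra.
Qed.

Lemma lip_bounded_scal n f K B c :
  lip_bounded n f K B -> lip_bounded n (fun x => c * f x) (Rabs c * K) (Rabs c * B).
Proof.
  intros [a0 [a1 a2]]; split; [apply Rmult_le_pos; [apply Rabs_pos|lra]|split].
  - intros x Hx. rewrite Rabs_mult. apply Rmult_le_compat_l; auto using Rabs_pos.
  - intros x y Hx Hy. replace (c * f x - c * f y) with (c * (f x - f y)) by ring.
    rewrite Rabs_mult, Rmult_assoc. apply Rmult_le_compat_l; auto using Rabs_pos.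
Qed.

Lemma lip_bounded_minus n f g K1 B1 K2 B2 :
  lip_bounded n f K1 B1 -> lip_bounded n g K2 B2 ->
  lip_bounded n (fun x => f x - g x) (K1 + K2) (B1 + B2).
Proof.
  intros Hf Hg. pose proof (lip_bounded_plus _ _ _ _ _ _ _ Hf (lip_bounded_scal _ _ _ _ (-1) Hg))
    as [p0 [p1 p2]].
  rewrite Rabs_m1, !Rmult_1_l in *. split; [lra|split]; intros.
  - replace (f x - g x) with (f x + -1 * g x) by ring. auto.
  - replace (f x - g x - (f y - g y)) with (f x + -1 * g x - (f y + -1 * g y)) by ring. auto.
Qed.

Lemma lip_bounded_mult n f g K1 B1 K2 B2 :
  lip_bounded n f K1 B1 -> lip_bounded n g K2 B2 ->
  lip_bounded n (fun x => f x * g x) (B1 * K2 + B2 * K1) (B1 * B2).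
Proof.
  intros Hf Hg.
  pose proof (lip_bounded_bound_nonneg _ _ _ _ Hf). pose proof (lip_bounded_bound_nonneg _ _ _ _ Hg).
  destruct Hf as [a0 [a1 a2]], Hg as [b0 [b1 b2]]. split; [nra|split].
  - intros x Hx. rewrite Rabs_mult. apply Rmult_le_compat; auto using Rabs_pos.
  - intros x y Hx Hy.
    replace (f x * g x - f y * g y) with (f x * (g x - g y) + g y * (f x - f y)) by ring.
    eapply Rle_trans; [apply Rabs_triang|]. rewrite !Rabs_mult.
    specialize (a1 x Hx). specialize (b1 y Hy). specialize (a2 x y Hx Hy). specialize (b2 x y Hx Hy).
    apply Rle_trans with (B1 * (K2 * l1_dist x y) + B2 * (K1 * l1_dist x y)); [|right; ring].
    apply Rplus_le_compat; apply Rmult_le_compat; auto using Rabs_pos.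
Qed.

Lemma lip_bounded_tail n f K B t :
  lip_bounded (S n) f K B -> lip_bounded n (fun xs => f (t :: xs)) K B.
Proof.
  intros [H0 [H1 H2]]; split; [lra|split].
  - intros x Hx. apply H1. simpl; lia.
  - intros x y Hx Hy. rewrite <- l1_dist_cons with (t := t). apply H2; simpl; lia.
Qed.

Lemma integ_cube_ext n f g :
  (forall x, length x = n -> f x = g x) -> integ_cube n f = integ_cube n g.
Proof.
  revert f g; induction n as [|n IH]; intros f g H; simpl.
  - apply H; reflexivity.
  - f_equal. apply functional_extensionality. intro t. apply IH.
    intros x Hx. apply H. simpl; lia.
Qed.

(* Proved simultaneously by induction on the dimension: integrability of each slice needs
   linearity in one dimension less. *)
Definition integ_cube_props (n : nat) : Prop :=
  (forall f K B, lip_bounded n f K B -> Rabs (integ_cube n f) <= (2 * PI) ^ n * B) /\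
  (forall f g K1 B1 K2 B2, lip_bounded n f K1 B1 -> lip_bounded n g K2 B2 ->
     integ_cube n (fun x => f x + g x) = integ_cube n f + integ_cube n g) /\
  (forall f K B c, lip_bounded n f K B -> integ_cube n (fun x => c * f x) = c * integ_cube n f).

Lemma integ_cube_props_minus n f g K1 B1 K2 B2 : integ_cube_props n ->
  lip_bounded n f K1 B1 -> lip_bounded n g K2 B2 ->
  integ_cube n (fun x => f x - g x) = integ_cube n f - integ_cube n g.
Proof.
  intros [_ [Iplus Iscal]] Hf Hg.
  rewrite (integ_cube_ext n _ (fun x => f x + -1 * g x)) by (intros; ring).
  rewrite (Iplus _ _ _ _ _ _ Hf (lip_bounded_scal _ _ _ _ (-1) Hg)), (Iscal _ _ _ _ Hg). ring.
Qed.

Lemma integ_cube_slice_lipschitz n f K B : integ_cube_props n -> lip_bounded (S n) f K B ->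
  forall s t, Rabs (integ_cube n (fun xs => f (s :: xs)) - integ_cube n (fun xs => f (t :: xs)))
              <= ((2 * PI) ^ n * K) * Rabs (s - t).
Proof.
  intros HI Hf s t.
  rewrite <- (integ_cube_props_minus n _ _ _ _ _ _ HI (lip_bounded_tail _ _ _ _ s Hf)
                (lip_bounded_tail _ _ _ _ t Hf)).
  rewrite Rmult_assoc. apply (proj1 HI _ (K + K)).
  destruct Hf as [h0 [h1 h2]]. split; [lra|split].
  - intros x Hx. eapply Rle_trans; [apply h2; simpl; lia|].
    simpl. rewrite l1_dist_refl, Rplus_0_r. lra.
  - intros x y Hx Hy.
    replace (f (s :: x) - f (t :: x) - (f (s :: y) - f (t :: y)))
      with ((f (s :: x) - f (s :: y)) - (f (t :: x) - f (t :: y))) by ring.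
    eapply Rle_trans; [apply Rabs_triang|]. rewrite Rabs_Ropp.
    assert (Hu : forall u, Rabs (f (u :: x) - f (u :: y)) <= K * l1_dist x y).
    { intro u. rewrite <- (l1_dist_cons u). apply h2; simpl; lia. }
    pose proof (Hu s); pose proof (Hu t). lra.
Qed.

Lemma ex_RInt_integ_cube_slice n f K B a b : integ_cube_props n -> lip_bounded (S n) f K B ->
  ex_RInt (fun t => integ_cube n (fun xs => f (t :: xs))) a b.
Proof.
  intros HI Hf. apply ex_RInt_lipschitz with ((2 * PI) ^ n * K).
  - pose proof two_PI_pos. destruct Hf. apply Rmult_le_pos; [apply pow_le|]; lra.
  - exact (integ_cube_slice_lipschitz n f K B HI Hf).
Qed.

Lemma integ_cube_props_S n : integ_cube_props n -> integ_cube_props (S n).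
Proof.
  intros HI. pose proof HI as [Ibound [Iplus Iscal]].
  assert (Hex : forall f K B, lip_bounded (S n) f K B ->
            ex_RInt (fun t => integ_cube n (fun xs => f (t :: xs))) (- PI) PI)
    by (intros; eapply ex_RInt_integ_cube_slice; eauto).
  split; [|split]; simpl.
  - intros f K B Hf. rewrite (RInt_tot_RInt _ _ _ (Hex _ _ _ Hf)).
    eapply Rle_trans; [apply abs_RInt_le_const|].
    + pose proof PI_RGT_0; lra.
    + exact (Hex _ _ _ Hf).
    + intros t _. apply (Ibound _ K), lip_bounded_tail, Hf.
    + right. ring.
  - intros f g K1 B1 K2 B2 Hf Hg.
    rewrite (RInt_tot_RInt _ _ _ (Hex _ _ _ Hf)), (RInt_tot_RInt _ _ _ (Hex _ _ _ Hg)).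
    rewrite (RInt_tot_RInt _ _ _ (Hex _ _ _ (lip_bounded_plus _ _ _ _ _ _ _ Hf Hg))).
    rewrite <- (RInt_plus (V:=R_CompleteNormedModule)) by (eapply Hex; eauto).
    apply RInt_ext. intros t _. eapply Iplus; apply lip_bounded_tail; eauto.
  - intros f K B c Hf.
    rewrite (RInt_tot_RInt _ _ _ (Hex _ _ _ Hf)).
    rewrite (RInt_tot_RInt _ _ _ (Hex _ _ _ (lip_bounded_scal _ _ _ _ c Hf))).
    rewrite <- (RInt_scal (V:=R_CompleteNormedModule)) by (eapply Hex; eauto).
    apply RInt_ext. intros t _. eapply Iscal; apply lip_bounded_tail; eauto.
Qed.

Lemma integ_cube_props_all n : integ_cube_props n.
Proof.
  induction n as [|n IH]; [|exact (integ_cube_props_S n IH)].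
  split; [|split]; simpl; auto.
  intros f K B [_ [H _]]. rewrite Rmult_1_l. apply H. reflexivity.
Qed.

Lemma integ_cube_bound n f K B :
  lip_bounded n f K B -> Rabs (integ_cube n f) <= (2 * PI) ^ n * B.
Proof. apply (integ_cube_props_all n). Qed.

Lemma integ_cube_plus n f g K1 B1 K2 B2 : lip_bounded n f K1 B1 -> lip_bounded n g K2 B2 ->
  integ_cube n (fun x => f x + g x) = integ_cube n f + integ_cube n g.
Proof. apply (integ_cube_props_all n). Qed.

Lemma integ_cube_scal n f K B c :
  lip_bounded n f K B -> integ_cube n (fun x => c * f x) = c * integ_cube n f.
Proof. apply (integ_cube_props_all n). Qed.

Lemma integ_cube_minus n f g K1 B1 K2 B2 : lip_bounded n f K1 B1 -> lip_bounded n g K2 B2 ->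
  integ_cube n (fun x => f x - g x) = integ_cube n f - integ_cube n g.
Proof. apply integ_cube_props_minus, integ_cube_props_all. Qed.

Lemma integ_cube_zero n : integ_cube n (fun _ => 0) = 0.
Proof.
  rewrite (integ_cube_ext n _ (fun _ => 0 * 1)) by (intros; ring).
  rewrite (integ_cube_scal n _ _ _ 0 (lip_bounded_const n 1)). ring.
Qed.

Lemma RInt_zero_on (G : R -> R) a b :
  (forall t, Rmin a b <= t <= Rmax a b -> G t = 0) -> RInt G a b = 0.
Proof.
  intros H. rewrite (RInt_ext G (fun _ => 0)) by (intros; apply H; lra).
  rewrite RInt_const. apply Rmult_0_r.
Qed.

Lemma RInt_translate_supported (G : R -> R) h :
  Rabs h <= PI -> (forall a b, ex_RInt G a b) ->
  (forall t, PI - Rabs h <= Rabs t -> G t = 0) ->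
  RInt (fun t => G (t + h)) (- PI) PI = RInt G (- PI) PI.
Proof.
  intros Hh HG HG0. pose proof PI_RGT_0.
  assert (E : RInt (fun t => G (t + h)) (- PI) PI = RInt G (- PI + h) (PI + h)).
  { replace (- PI + h) with (1 * - PI + h) by ring. replace (PI + h) with (1 * PI + h) by ring.
    rewrite <- (RInt_comp_lin G 1 h (- PI) PI) by auto.
    apply RInt_ext. intros t _. unfold scal; simpl; unfold mult; simpl.
    rewrite !Rmult_1_l. reflexivity. }
  rewrite E, <- (RInt_Chasles G (- PI + h) (- PI) (PI + h)) by auto.
  rewrite <- (RInt_Chasles G (- PI) PI (PI + h)) by auto.
  rewrite (RInt_zero_on G (- PI + h) (- PI)), (RInt_zero_on G PI (PI + h)).
  - unfold plus; simpl. ring.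
  - intros t Ht. apply HG0. unfold Rmin, Rmax, Rabs in *.
    repeat destruct Rle_dec; repeat destruct Rcase_abs; lra.
  - intros t Ht. apply HG0. unfold Rmin, Rmax, Rabs in *.
    repeat destruct Rle_dec; repeat destruct Rcase_abs; lra.
Qed.

Fixpoint shift_coord (i : nat) (h : R) (xs : list R) : list R :=
  match xs with
  | nil => nil
  | x :: r => match i with O => (x + h) :: r | S i' => x :: shift_coord i' h r end
  end.

Lemma shift_coord_length i h x : length (shift_coord i h x) = length x.
Proof. revert i; induction x; intros [|i]; simpl; auto. Qed.

Lemma l1_dist_shift_coord i h x y : l1_dist (shift_coord i h x) (shift_coord i h y) = l1_dist x y.
Proof.
  revert i y; induction x as [|a x IH]; intros [|i] [|b y]; simpl; auto.
  - replace (a + h - (b + h)) with (a - b) by ring. reflexivity.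
  - rewrite IH. reflexivity.
Qed.

Lemma shift_coord_add i h1 h2 x : shift_coord i h1 (shift_coord i h2 x) = shift_coord i (h2 + h1) x.
Proof. revert i; induction x; intros [|i]; simpl; f_equal; auto. ring. Qed.

Lemma shift_coord_0 i x : shift_coord i 0 x = x.
Proof. revert i; induction x; intros [|i]; simpl; f_equal; auto. ring. Qed.

Lemma nth_shift_coord i h x : (i < length x)%nat -> nth i (shift_coord i h x) 0 = nth i x 0 + h.
Proof. revert i; induction x; intros [|i] Hi; simpl in *; try lia; auto. apply IHx; lia. Qed.

Lemma lip_bounded_shift_coord n f K B i h :
  lip_bounded n f K B -> lip_bounded n (fun x => f (shift_coord i h x)) K B.
Proof.
  intros [a0 [a1 a2]]; split; [auto|split].
  - intros x Hx; apply a1; rewrite shift_coord_length; auto.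
  - intros x y Hx Hy. rewrite <- (l1_dist_shift_coord i h). apply a2; rewrite shift_coord_length; auto.
Qed.

Lemma integ_cube_shift_coord n : forall i h f K B, (i < n)%nat -> Rabs h <= PI ->
  lip_bounded n f K B -> (forall x, length x = n -> PI - Rabs h <= Rabs (nth i x 0) -> f x = 0) ->
  integ_cube n (fun x => f (shift_coord i h x)) = integ_cube n f.
Proof.
  induction n as [|n IH]; intros [|i] h f K B Hi Hh Hf Hv; simpl; try lia.
  - set (G := fun t => integ_cube n (fun xs => f (t :: xs))).
    pose proof (integ_cube_props_all n) as HI.
    assert (HGs : ex_RInt (fun t => G (t + h)) (- PI) PI).
    { apply ex_RInt_lipschitz with ((2 * PI) ^ n * K).
      - pose proof two_PI_pos. destruct Hf. apply Rmult_le_pos; [apply pow_le|]; lra.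
      - intros s t. eapply Rle_trans; [apply (integ_cube_slice_lipschitz n f K B HI Hf)|].
        replace (s + h - (t + h)) with (s - t) by ring. lra. }
    change (RInt_tot (fun t => G (t + h)) (- PI) PI = RInt_tot G (- PI) PI).
    rewrite !RInt_tot_RInt by (auto; eapply ex_RInt_integ_cube_slice; eauto).
    apply RInt_translate_supported; auto.
    + intros; eapply ex_RInt_integ_cube_slice; eauto.
    + intros t Ht. unfold G. rewrite <- (integ_cube_zero n). apply integ_cube_ext.
      intros x Hx. apply Hv; simpl; auto.
  - f_equal. apply functional_extensionality. intro t.
    apply (IH i h (fun xs => f (t :: xs)) K B); try lia; auto using lip_bounded_tail.
    intros x Hx Hn. apply Hv; simpl; auto.
Qed.

(** * Trigonometric integrals *)

Lemma cos_lipschitz a b : Rabs (cos a - cos b) <= Rabs (a - b).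
Proof.
  rewrite <- (Rmult_1_l (Rabs (a - b))). apply (derivable_lipschitz cos (fun t => - sin t)).
  - apply derivable_pt_lim_cos.
  - intro t. rewrite Rabs_Ropp. apply Rabs_le, SIN_bound.
Qed.

Lemma sin_lipschitz a b : Rabs (sin a - sin b) <= Rabs (a - b).
Proof.
  rewrite <- (Rmult_1_l (Rabs (a - b))). apply (derivable_lipschitz sin cos).
  - apply derivable_pt_lim_sin.
  - intro t. apply Rabs_le, COS_bound.
Qed.

Fixpoint l1_normZ (p : list Z) : R :=
  match p with nil => 0 | a :: q => Rabs (IZR a) + l1_normZ q end.

Lemma l1_normZ_nonneg p : 0 <= l1_normZ p.
Proof. induction p; simpl; try lra. pose proof (Rabs_pos (IZR a)); lra. Qed.

Lemma dotZR_cons a p t x : dotZR (a :: p) (t :: x) = IZR a * t + dotZR p x.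
Proof. reflexivity. Qed.

Lemma dotZR_lipschitz p x y : length x = length p -> length y = length p ->
  Rabs (dotZR p x - dotZR p y) <= l1_normZ p * l1_dist x y.
Proof.
  revert x y; induction p as [|a p IH]; intros [|s x] [|t y] Hx Hy; simpl in *; try lia.
  - unfold dotZR; simpl. rewrite Rminus_diag, Rabs_R0; lra.
  - rewrite !dotZR_cons.
    replace (IZR a * s + dotZR p x - (IZR a * t + dotZR p y))
      with (IZR a * (s - t) + (dotZR p x - dotZR p y)) by ring.
    eapply Rle_trans; [apply Rabs_triang|]. rewrite Rabs_mult.
    specialize (IH x y ltac:(lia) ltac:(lia)).
    pose proof (l1_normZ_nonneg p). pose proof (l1_dist_nonneg x y).
    pose proof (Rabs_pos (IZR a)). pose proof (Rabs_pos (s - t)). nra.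
Qed.

Lemma dotZR_shift_coord p i h x : length p = length x -> (i < length x)%nat ->
  dotZR p (shift_coord i h x) = dotZR p x + IZR (nth i p 0%Z) * h.
Proof.
  revert p i; induction x as [|t x IH]; intros [|a p] [|i] Hl Hi; simpl in *; try lia.
  - unfold dotZR; simpl. ring.
  - rewrite !dotZR_cons, IH by lia. ring.
Qed.

Lemma lip_bounded_cos_dot n p : length p = n ->
  lip_bounded n (fun x => cos (dotZR p x)) (l1_normZ p) 1.
Proof.
  intros Hp. split; [apply l1_normZ_nonneg|split].
  - intros x _. apply Rabs_le, COS_bound.
  - intros x y Hx Hy. eapply Rle_trans; [apply cos_lipschitz|]. apply dotZR_lipschitz; lia.
Qed.

Lemma lip_bounded_sin_dot n p : length p = n ->
  lip_bounded n (fun x => sin (dotZR p x)) (l1_normZ p) 1.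
Proof.
  intros Hp. split; [apply l1_normZ_nonneg|split].
  - intros x _. apply Rabs_le, SIN_bound.
  - intros x y Hx Hy. eapply Rle_trans; [apply sin_lipschitz|]. apply dotZR_lipschitz; lia.
Qed.

Lemma continuous_cos_mult (k : R) z : continuous (fun t => cos (k * t)) z.
Proof.
  apply continuity_pt_filterlim, derivable_continuous_pt.
  apply derivable_pt_comp; [apply derivable_pt_scal, derivable_pt_id|apply derivable_pt_cos].
Qed.

Lemma continuous_sin_mult (k : R) z : continuous (fun t => sin (k * t)) z.
Proof.
  apply continuity_pt_filterlim, derivable_continuous_pt.
  apply derivable_pt_comp; [apply derivable_pt_scal, derivable_pt_id|apply derivable_pt_sin].
Qed.

Lemma RInt_cos_IZR_mult k :
  RInt (fun t => cos (IZR k * t)) (- PI) PI = if Z.eq_dec k 0 then 2 * PI else 0.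
Proof.
  destruct (Z.eq_dec k 0) as [->|Hk].
  - rewrite (RInt_ext _ (fun _ => 1)) by (intros; rewrite Rmult_0_l, cos_0; reflexivity).
    rewrite RInt_const. unfold scal; simpl; unfold mult; simpl. ring.
  - apply not_0_IZR in Hk. apply is_RInt_unique.
    replace 0 with (minus (sin (IZR k * PI) / IZR k) (sin (IZR k * - PI) / IZR k)).
    + apply (is_RInt_derive (V:=R_CompleteNormedModule) (fun t => sin (IZR k * t) / IZR k)).
      * intros x _. auto_derive; auto. field. auto.
      * intros; apply continuous_cos_mult.
    + unfold minus, plus, opp; simpl.
      rewrite Ropp_mult_distr_r_reverse, sin_neg, sin_eq_0_1 by (exists k; reflexivity).
      field. auto.
Qed.

Lemma RInt_sin_IZR_mult k : RInt (fun t => sin (IZR k * t)) (- PI) PI = 0.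
Proof.
  destruct (Z.eq_dec k 0) as [->|Hk].
  - rewrite (RInt_ext _ (fun _ => 0)) by (intros; rewrite Rmult_0_l, sin_0; reflexivity).
    rewrite RInt_const. unfold scal; simpl; unfold mult; simpl. ring.
  - apply not_0_IZR in Hk. apply is_RInt_unique.
    replace 0 with (minus (- cos (IZR k * PI) / IZR k) (- cos (IZR k * - PI) / IZR k)).
    + apply (is_RInt_derive (V:=R_CompleteNormedModule) (fun t => - cos (IZR k * t) / IZR k)).
      * intros x _. auto_derive; auto. field. auto.
      * intros; apply continuous_sin_mult.
    + unfold minus, plus, opp; simpl. rewrite Ropp_mult_distr_r_reverse, cos_neg. field. auto.
Qed.

Definition all_zero (p : list Z) : bool := forallb (fun z => Z.eqb z 0) p.

Lemma integ_cube_trig_dot n : forall p, length p = n ->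
  integ_cube n (fun x => cos (dotZR p x)) = (if all_zero p then (2 * PI) ^ n else 0) /\
  integ_cube n (fun x => sin (dotZR p x)) = 0.
Proof.
  induction n as [|n IH]; intros [|a q] Hp; simpl in Hp; try lia.
  - simpl. unfold dotZR; simpl. rewrite cos_0, sin_0. auto.
  - destruct (IH q ltac:(lia)) as [Hc Hs].
    pose proof (lip_bounded_cos_dot n q ltac:(lia)) as Lc.
    pose proof (lip_bounded_sin_dot n q ltac:(lia)) as Ls.
    set (Cq := integ_cube n (fun x => cos (dotZR q x))) in *.
    assert (Ec : forall t, integ_cube n (fun xs => cos (dotZR (a :: q) (t :: xs)))
                           = Cq * cos (IZR a * t)).
    { intro t. rewrite (integ_cube_ext n _ (fun xs => cos (IZR a * t) * cos (dotZR q xs)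
                                                   - sin (IZR a * t) * sin (dotZR q xs)))
        by (intros; rewrite dotZR_cons, cos_plus; ring).
      rewrite (integ_cube_minus _ _ _ _ _ _ _ (lip_bounded_scal _ _ _ _ _ Lc)
                 (lip_bounded_scal _ _ _ _ _ Ls)).
      rewrite (integ_cube_scal _ _ _ _ _ Lc), (integ_cube_scal _ _ _ _ _ Ls), Hs. fold Cq. ring. }
    assert (Es : forall t, integ_cube n (fun xs => sin (dotZR (a :: q) (t :: xs)))
                           = Cq * sin (IZR a * t)).
    { intro t. rewrite (integ_cube_ext n _ (fun xs => sin (IZR a * t) * cos (dotZR q xs)
                                                   + cos (IZR a * t) * sin (dotZR q xs)))
        by (intros; rewrite dotZR_cons, sin_plus; ring).
      rewrite (integ_cube_plus _ _ _ _ _ _ _ (lip_bounded_scal _ _ _ _ _ Lc)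
                 (lip_bounded_scal _ _ _ _ _ Ls)).
      rewrite (integ_cube_scal _ _ _ _ _ Lc), (integ_cube_scal _ _ _ _ _ Ls), Hs. fold Cq. ring. }
    simpl integ_cube. rewrite (functional_extensionality _ _ Ec), (functional_extensionality _ _ Es).
    assert (Xc : ex_RInt (fun t => cos (IZR a * t)) (- PI) PI)
      by (apply (ex_RInt_continuous (V:=R_CompleteNormedModule)); intros; apply continuous_cos_mult).
    assert (Xs : ex_RInt (fun t => sin (IZR a * t)) (- PI) PI)
      by (apply (ex_RInt_continuous (V:=R_CompleteNormedModule)); intros; apply continuous_sin_mult).
    rewrite !RInt_tot_RInt by (apply (ex_RInt_scal (V:=R_NormedModule)); auto).
    rewrite !(RInt_scal (V:=R_CompleteNormedModule)) by auto.
    unfold scal; simpl; unfold mult; simpl.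
    rewrite RInt_cos_IZR_mult, RInt_sin_IZR_mult, Hc. split; [|ring].
    simpl all_zero. destruct (Z.eq_dec a 0) as [->|Ha]; simpl.
    + destruct (all_zero q); ring.
    + destruct (Z.eqb_spec a 0); [contradiction|]. simpl. ring.
Qed.

(** * Derivatives and finite differences *)

(* Chain rule bookkeeping: given derivative sequences [F] and [G], every derivative of
   [t => F 0 (G 0 t)] is a polynomial in the [F j (G 0 t)] and the [G i t]; [chain_deriv k]
   is the one for the k-th derivative. *)
Inductive dexpr := DF (j : nat) | DG (i : nat) | DAdd (a b : dexpr) | DMul (a b : dexpr).

Fixpoint dexpr_eval (F G : nat -> R -> R) (e : dexpr) (t : R) : R :=
  match e with
  | DF j => F j (G 0%nat t)
  | DG i => G i t
  | DAdd a b => dexpr_eval F G a t + dexpr_eval F G b t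
  | DMul a b => dexpr_eval F G a t * dexpr_eval F G b t
  end.

Fixpoint dexpr_deriv (e : dexpr) : dexpr :=
  match e with
  | DF j => DMul (DF (S j)) (DG 1)
  | DG i => DG (S i)
  | DAdd a b => DAdd (dexpr_deriv a) (dexpr_deriv b)
  | DMul a b => DAdd (DMul (dexpr_deriv a) b) (DMul a (dexpr_deriv b))
  end.

Fixpoint chain_deriv (k : nat) : dexpr :=
  match k with O => DF 0 | S k' => dexpr_deriv (chain_deriv k') end.

Lemma dexpr_eval_deriv F G t :
  (forall j, derivable_pt_lim (F j) (G 0%nat t) (F (S j) (G 0%nat t))) ->
  (forall i, derivable_pt_lim (G i) t (G (S i) t)) ->
  forall e, derivable_pt_lim (dexpr_eval F G e) t (dexpr_eval F G (dexpr_deriv e) t).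
Proof.
  intros HF HG. induction e as [j|i|a IHa b IHb|a IHa b IHb]; simpl.
  - apply (derivable_pt_lim_comp (G 0%nat) (F j)); auto.
  - apply HG.
  - apply (derivable_pt_lim_plus (dexpr_eval F G a) (dexpr_eval F G b)); auto.
  - exact (derivable_pt_lim_mult (dexpr_eval F G a) (dexpr_eval F G b) t _ _ IHa IHb).
Qed.

Fixpoint dexpr_bound (MF MG : nat -> R) (e : dexpr) : R :=
  match e with
  | DF j => MF j
  | DG i => MG i
  | DAdd a b => dexpr_bound MF MG a + dexpr_bound MF MG b
  | DMul a b => dexpr_bound MF MG a * dexpr_bound MF MG b
  end.

Lemma dexpr_eval_bound F G MF MG t :
  (forall j, Rabs (F j (G 0%nat t)) <= MF j) -> (forall i, Rabs (G i t) <= MG i) ->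
  forall e, Rabs (dexpr_eval F G e t) <= dexpr_bound MF MG e.
Proof.
  intros HF HG. induction e; simpl; auto.
  - eapply Rle_trans; [apply Rabs_triang|]. lra.
  - rewrite Rabs_mult. apply Rmult_le_compat; auto using Rabs_pos.
Qed.

Lemma dexpr_bound_nonneg MF MG : (forall j, 0 <= MF j) -> (forall i, 0 <= MG i) ->
  forall e, 0 <= dexpr_bound MF MG e.
Proof. intros H1 H2; induction e; simpl; auto; nra. Qed.

Fixpoint divisible_by (P : nat -> Prop) (e : dexpr) : Prop :=
  match e with
  | DF j => P j
  | DG _ => False
  | DAdd a b => divisible_by P a /\ divisible_by P b
  | DMul a b => divisible_by P a \/ divisible_by P b
  end.

Lemma dexpr_eval_divisible P F G t : (forall j, P j -> F j (G 0%nat t) = 0) ->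
  forall e, divisible_by P e -> dexpr_eval F G e t = 0.
Proof.
  intros H; induction e as [j|i|a IHa b IHb|a IHa b IHb]; simpl; intros He; try contradiction.
  - auto.
  - destruct He. rewrite IHa, IHb by auto. ring.
  - destruct He; [rewrite IHa|rewrite IHb]; auto; ring.
Qed.

Lemma divisible_by_deriv (P : nat -> Prop) : (forall j, P j -> P (S j)) ->
  forall e, divisible_by P e -> divisible_by P (dexpr_deriv e).
Proof. intros HP; induction e; simpl; intros He; try contradiction; auto; tauto. Qed.

Lemma chain_deriv_divisible k : divisible_by (fun _ => True) (chain_deriv k).
Proof. induction k; simpl; auto. apply divisible_by_deriv; auto. Qed.

Lemma chain_deriv_divisible_pos k : (1 <= k)%nat -> divisible_by (fun j => (1 <= j)%nat) (chain_deriv k).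
Proof.
  induction k as [|[|k] IH]; intros Hk; [lia| |].
  - simpl. left. lia.
  - apply divisible_by_deriv; [intros; lia|]. apply IH; lia.
Qed.

Fixpoint sqrt_deriv_coef (i : nat) : R :=
  match i with O => / 2 | S i' => sqrt_deriv_coef i' * (- INR (2 * i' + 1) / 2) end.

Definition sqrt_deriv (i : nat) (s : R) : R :=
  match i with O => sqrt s | S i' => sqrt_deriv_coef i' * (/ sqrt s) ^ (2 * i' + 1) end.

Lemma sqrt_deriv_derivable i s : 0 < s -> derivable_pt_lim (sqrt_deriv i) s (sqrt_deriv (S i) s).
Proof.
  intros Hs. apply is_derive_Reals. pose proof (sqrt_lt_R0 s Hs) as Hq.
  destruct i as [|i].
  - unfold sqrt_deriv. auto_derive; [lra|]. simpl. field. lra.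
  - change (sqrt_deriv (S i)) with (fun s => sqrt_deriv_coef i * (/ sqrt s) ^ (2 * i + 1)).
    change (sqrt_deriv (S (S i)) s)
      with (sqrt_deriv_coef (S i) * (/ sqrt s) ^ (2 * S i + 1)).
    auto_derive; [repeat split; lra|].
    replace (Init.Nat.pred (2 * i + 1)) with (2 * i)%nat by lia.
    replace (2 * S i + 1)%nat with (2 * i + 3)%nat by lia.
    rewrite pow_add. simpl sqrt_deriv_coef.
    replace (Init.Nat.pred (i + (i + 0) + 1)) with (2 * i)%nat by lia.
    replace (i + (i + 0) + 1)%nat with (2 * i + 1)%nat by lia.
    replace (/ (2 * sqrt s)) with (/ 2 * / sqrt s) by (field; lra).
    replace (/ (sqrt s * sqrt s)) with (/ sqrt s * / sqrt s) by (field; lra).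
    set (u := / sqrt s). set (w := u ^ (2 * i)). set (K := INR (2 * i + 1)). simpl pow.
    match goal with |- ?a = ?b => change (@eq R a b) end. field.
Qed.

Definition sq_shift_deriv (a c : R) (i : nat) (s : R) : R :=
  match i with O => a + (c + s) ^ 2 | 1%nat => 2 * (c + s) | 2%nat => 2 | _ => 0 end.

Lemma sq_shift_deriv_derivable a c i s :
  derivable_pt_lim (sq_shift_deriv a c i) s (sq_shift_deriv a c (S i) s).
Proof.
  apply is_derive_Reals. destruct i as [|[|[|i]]]; unfold sq_shift_deriv.
  - auto_derive; auto. simpl. match goal with |- ?a = ?b => change (@eq R a b) end. ring.
  - auto_derive; auto. match goal with |- ?a = ?b => change (@eq R a b) end. ring.
  - auto_derive; auto.
  - auto_derive; auto.
Qed.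

Definition fdiff (h : R) (v : R -> R) : R -> R := fun s => v s - v (s + h).

Fixpoint fdiff_iter (h : R) (L : nat) (v : R -> R) : R -> R :=
  match L with O => v | S L' => fdiff h (fdiff_iter h L' v) end.

Lemma fdiff_iter_comm h L v s : fdiff_iter h L (fdiff h v) s = fdiff h (fdiff_iter h L v) s.
Proof.
  revert s; induction L as [|L IH]; intros s; simpl; auto.
  unfold fdiff at 1. rewrite !IH. reflexivity.
Qed.

Lemma fdiff_iter_bound h L : forall (v : R -> R) (V : nat -> R -> R) M,
  (forall t, V 0%nat t = v t) -> (forall k t, derivable_pt_lim (V k) t (V (S k) t)) ->
  (forall t, Rabs (V L t) <= M) -> forall s, Rabs (fdiff_iter h L v s) <= Rabs h ^ L * M.
Proof.
  induction L as [|L IH]; intros v V M H0 Hd HM s.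
  - simpl. rewrite <- H0. specialize (HM s). lra.
  - change (fdiff_iter h (S L) v s) with (fdiff h (fdiff_iter h L v) s).
    rewrite <- fdiff_iter_comm.
    replace (Rabs h ^ S L * M) with (Rabs h ^ L * (Rabs h * M)) by (simpl; ring).
    apply (IH (fdiff h v) (fun k t => V k t - V k (t + h))).
    + intros t. unfold fdiff. rewrite !H0. reflexivity.
    + intros k t. apply (derivable_pt_lim_minus (V k) (fun t => V k (t + h))); [apply Hd|].
      replace (V (S k) (t + h)) with (V (S k) (t + h) * (1 + 0)) by ring.
      apply (derivable_pt_lim_comp (fun t => t + h) (V k)); [|apply Hd].
      apply (derivable_pt_lim_plus id (fun _ => h));
        [apply derivable_pt_lim_id|apply derivable_pt_lim_const].
    + intros t. rewrite Rmult_comm.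
      replace (Rabs h) with (Rabs (t - (t + h))) by (rewrite <- Rabs_Ropp; f_equal; ring).
      apply (derivable_lipschitz (V L) (V (S L))); auto.
Qed.

(** * Euclidean norm and coordinate differences *)

Definition sqsum (x : list R) : R := fold_right (fun a s => a * a + s) 0 x.

Lemma euclid_norm_sqsum x : euclid_norm x = sqrt (sqsum x).
Proof. reflexivity. Qed.

Lemma sqsum_nonneg x : 0 <= sqsum x.
Proof. induction x; simpl; nra. Qed.

Lemma sq_le_sqsum x b : In b x -> b * b <= sqsum x.
Proof.
  induction x as [|a x IH]; simpl; [tauto|]. intros [->|Hin].
  - pose proof (sqsum_nonneg x); lra.
  - pose proof (IH Hin). nra.
Qed.

Lemma sqsum_shift_coord i x : (i < length x)%nat -> exists a, 0 <= a /\
  forall s, sqsum (shift_coord i s x) = a + (nth i x 0 + s) ^ 2.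
Proof.
  revert i; induction x as [|b x IH]; intros [|i] Hi; simpl in Hi; try lia.
  - exists (sqsum x). split; [apply sqsum_nonneg|]. intros s. simpl. ring.
  - destruct (IH i ltac:(lia)) as [a [Ha Hs]]. exists (b * b + a). split; [nra|].
    intros s. simpl. rewrite Hs. simpl. ring.
Qed.

Lemma sqsum_l1_dist_le x y Y : length x = length y -> 0 <= Y -> (forall b, In b y -> Rabs b <= Y) ->
  sqsum x <= sqsum y + 2 * Y * l1_dist x y + l1_dist x y * l1_dist x y.
Proof.
  revert y; induction x as [|a x IH]; intros [|b y] Hl HY Hb; simpl in *; try lia; try lra.
  specialize (IH y ltac:(lia) HY (fun c Hc => Hb c (or_intror Hc))).
  pose proof (Hb b (or_introl eq_refl)) as Hbb.
  pose proof (l1_dist_nonneg x y). pose proof (Rabs_pos (a - b)).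
  assert (a * a <= b * b + 2 * Y * Rabs (a - b) + Rabs (a - b) * Rabs (a - b)).
  { replace (Rabs (a - b) * Rabs (a - b)) with ((a - b) * (a - b))
      by (rewrite <- Rabs_mult, Rabs_pos_eq; [|apply Rle_0_sqr]; reflexivity).
    assert (b * (a - b) <= Y * Rabs (a - b)).
    { eapply Rle_trans; [apply Rle_abs|]. rewrite Rabs_mult. apply Rmult_le_compat_r; auto. }
    nra. }
  nra.
Qed.

Lemma euclid_norm_triangle x y : length x = length y ->
  euclid_norm x <= euclid_norm y + l1_dist x y.
Proof.
  intros Hl. rewrite !euclid_norm_sqsum. set (Y := sqrt (sqsum y)).
  assert (HY : 0 <= Y) by apply sqrt_pos.
  assert (Hb : forall b, In b y -> Rabs b <= Y).
  { intros b Hin. unfold Y. rewrite <- sqrt_Rsqr_abs. apply sqrt_le_1_alt.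
    unfold Rsqr. apply sq_le_sqsum; auto. }
  pose proof (sqsum_l1_dist_le x y Y Hl HY Hb). pose proof (l1_dist_nonneg x y).
  rewrite <- (sqrt_square (Y + l1_dist x y)) by lra. apply sqrt_le_1_alt.
  assert (Y * Y = sqsum y) by (apply sqrt_sqrt, sqsum_nonneg). nra.
Qed.

Lemma euclid_norm_lipschitz x y : length x = length y ->
  Rabs (euclid_norm x - euclid_norm y) <= l1_dist x y.
Proof.
  intros Hl. pose proof (euclid_norm_triangle x y Hl).
  pose proof (euclid_norm_triangle y x (eq_sym Hl)) as Hyx. rewrite l1_dist_sym in Hyx.
  apply Rabs_le. split; lra.
Qed.

Definition coord_diff i h (w : list R -> R) (x : list R) : R := w x - w (shift_coord i h x).

Fixpoint coord_diff_iter i h L (w : list R -> R) : list R -> R :=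
  match L with O => w | S L' => coord_diff i h (coord_diff_iter i h L' w) end.

Lemma coord_diff_iter_shift_coord i h L w x : forall s,
  coord_diff_iter i h L w (shift_coord i s x) = fdiff_iter h L (fun s => w (shift_coord i s x)) s.
Proof.
  induction L as [|L IH]; intros s; simpl; auto.
  unfold coord_diff, fdiff. rewrite shift_coord_add, !IH. reflexivity.
Qed.

Lemma lip_bounded_coord_diff_iter n w K B i h L :
  lip_bounded n w K B -> lip_bounded n (coord_diff_iter i h L w) (2 ^ L * K) (2 ^ L * B).
Proof.
  induction L as [|L IH]; intros Hw; simpl.
  - rewrite !Rmult_1_l. auto.
  - replace (2 * 2 ^ L * K) with (2 ^ L * K + 2 ^ L * K) by ring.
    replace (2 * 2 ^ L * B) with (2 ^ L * B + 2 ^ L * B) by ring.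
    apply lip_bounded_minus; auto using lip_bounded_shift_coord.
Qed.

Lemma coord_diff_iter_vanish (w : list R -> R) d i h L :
  (forall x, (i < length x)%nat -> d < Rabs (nth i x 0) -> w x = 0) ->
  forall x, (i < length x)%nat -> (forall k, (k <= L)%nat -> d < Rabs (nth i x 0 + INR k * h)) ->
  coord_diff_iter i h L w x = 0.
Proof.
  intros Hw. induction L as [|L IH]; intros x Hi Hk; simpl.
  - apply Hw; auto. specialize (Hk 0%nat ltac:(lia)). simpl in Hk.
    rewrite Rmult_0_l, Rplus_0_r in Hk. auto.
  - unfold coord_diff. rewrite !IH; [ring| |auto|auto|].
    + rewrite shift_coord_length; auto.
    + intros k Hkl. rewrite nth_shift_coord by auto. specialize (Hk (S k) ltac:(lia)).
      rewrite S_INR in Hk. replace (nth i x 0 + h + INR k * h) with (nth i x 0 + (INR k + 1) * h)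
        by ring. auto.
    + intros k Hkl. apply Hk. lia.
Qed.

(** * Halving by translation *)

Definition wave (tr : R -> R) : Prop :=
  (forall a, tr (a + PI) = - tr a) /\
  (forall n p, length p = n -> lip_bounded n (fun x => tr (dotZR p x)) (l1_normZ p) 1).

Lemma wave_cos : wave cos.
Proof. split; [apply neg_cos|apply lip_bounded_cos_dot]. Qed.

Lemma wave_sin : wave sin.
Proof. split; [apply neg_sin|apply lip_bounded_sin_dot]. Qed.

(* Translating by [h] in the direction where [p.x] grows by [PI] flips the sign of [tr (p.x)]. *)
Lemma integ_cube_coord_diff_wave n tr p i h w K B : wave tr -> length p = n -> (i < n)%nat ->
  IZR (nth i p 0%Z) * h = PI -> Rabs h <= PI -> lip_bounded n w K B ->
  (forall x, length x = n -> PI - Rabs h <= Rabs (nth i x 0) -> w x = 0) ->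
  integ_cube n (fun x => coord_diff i h w x * tr (dotZR p x))
  = 2 * integ_cube n (fun x => w x * tr (dotZR p x)).
Proof.
  intros [Htr Hlip] Hp Hi Hph Hh Hw Hv.
  pose proof (lip_bounded_mult _ _ _ _ _ _ _ Hw (Hlip n p Hp)) as L1.
  pose proof (lip_bounded_shift_coord _ _ _ _ i h L1) as L2.
  assert (Hflip : integ_cube n (fun x => w (shift_coord i h x) * tr (dotZR p x))
                  = - integ_cube n (fun x => w x * tr (dotZR p x))).
  { rewrite (integ_cube_ext n _
      (fun x => -1 * (w (shift_coord i h x) * tr (dotZR p (shift_coord i h x)))))
      by (intros x Hx; rewrite dotZR_shift_coord, Hph, Htr by lia; ring).
    rewrite (integ_cube_scal _ _ _ _ (-1) L2), (integ_cube_shift_coord n i h _ _ _ Hi Hh L1)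
      by (intros x Hx Hx2; rewrite Hv; auto; ring).
    ring. }
  rewrite (integ_cube_ext n _ (fun x => w x * tr (dotZR p x) - w (shift_coord i h x) * tr (dotZR p x)))
    by (intros; unfold coord_diff; ring).
  rewrite (integ_cube_minus _ _ _ _ _ _ _ L1 (lip_bounded_mult _ _ _ _ _ _ _
             (lip_bounded_shift_coord _ _ _ _ i h Hw) (Hlip n p Hp))), Hflip.
  ring.
Qed.

Lemma integ_cube_coord_diff_iter_wave n tr p i h L w d K B : wave tr -> length p = n ->
  (i < n)%nat -> IZR (nth i p 0%Z) * h = PI -> Rabs h <= PI -> INR L * Rabs h < PI - d ->
  lip_bounded n w K B -> (forall x, (i < length x)%nat -> d < Rabs (nth i x 0) -> w x = 0) ->
  integ_cube n (fun x => w x * tr (dotZR p x))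
  = (/ 2) ^ L * integ_cube n (fun x => coord_diff_iter i h L w x * tr (dotZR p x)).
Proof.
  intros Htr Hp Hi Hph Hh HL Hw Hv. induction L as [|L IH]; [simpl; ring|].
  rewrite S_INR in HL. pose proof (Rabs_pos h).
  rewrite IH by nra. simpl coord_diff_iter.
  rewrite (integ_cube_coord_diff_wave n tr p i h _ _ _ Htr Hp Hi Hph Hh
             (lip_bounded_coord_diff_iter n w K B i h L Hw)).
  - simpl pow. field.
  - intros x Hx Hxi. apply (coord_diff_iter_vanish w d); [auto|lia|].
    intros k Hk. apply le_INR in Hk.
    pose proof (Rabs_triang_inv (nth i x 0) (- (INR k * h))).
    replace (nth i x 0 - - (INR k * h)) with (nth i x 0 + INR k * h) in * by ring.
    rewrite Rabs_Ropp, Rabs_mult, (Rabs_right (INR k)) in * by (apply Rle_ge, pos_INR).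
    nra.
Qed.

Definition const1_deriv (k : nat) : R := match k with O => 1 | _ => 0 end.

Lemma derivable_pt_lim_locally_const f x a b c l : a < x < b ->
  (forall z, a < z < b -> f z = c) -> derivable_pt_lim f x l -> l = 0.
Proof.
  intros Hx Hz Hd. eapply uniqueness_limite; [|apply derivable_pt_lim_const].
  apply (derivable_pt_lim_locally_ext f _ x a b l Hx Hz Hd).
Qed.

Lemma sqrt_lt_of_lt_sq s d : 0 <= s -> 0 < d -> s < d * d -> sqrt s < d.
Proof. intros. rewrite <- (sqrt_square d) by lra. apply sqrt_lt_1_alt. lra. Qed.

Lemma lt_sqrt_of_sq_lt s d : 0 <= d -> d * d < s -> d < sqrt s.
Proof. intros. rewrite <- (sqrt_square d) by lra. apply sqrt_lt_1_alt. nra. Qed.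

Definition maxabs (p : list Z) : R := fold_right (fun z m => Rmax (Rabs (IZR z)) m) 0 p.

Lemma maxabs_nonneg p : 0 <= maxabs p.
Proof. induction p; simpl; [lra|]. eapply Rle_trans; [apply IHp|apply Rmax_r]. Qed.

Lemma maxabs_attained p : (0 < length p)%nat ->
  exists i, (i < length p)%nat /\ Rabs (IZR (nth i p 0%Z)) = maxabs p.
Proof.
  induction p as [|a [|b q] IH]; intros Hl; simpl in Hl; try lia.
  - exists 0%nat. split; [simpl; lia|]. simpl. unfold Rmax. destruct Rle_dec; auto.
    pose proof (Rabs_pos (IZR a)). lra.
  - destruct IH as [j [Hj Hj2]]; [simpl; lia|].
    change (maxabs (a :: b :: q)) with (Rmax (Rabs (IZR a)) (maxabs (b :: q))).
    rewrite <- Hj2. unfold Rmax at 1. destruct Rle_dec.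
    + exists (S j). split; [simpl in *; lia|reflexivity].
    + exists 0%nat. split; [simpl; lia|reflexivity].
Qed.

Lemma all_zero_maxabs p : all_zero p = true -> maxabs p = 0.
Proof.
  induction p; simpl; auto. intros H. apply andb_prop in H. destruct H as [H1 H2].
  apply Z.eqb_eq in H1. subst. rewrite IHp by auto. rewrite Rabs_R0. unfold Rmax.
  destruct Rle_dec; lra.
Qed.

Lemma integ_cube_trig_dot_bound n p L tr : tr = cos \/ tr = sin -> length p = n ->
  Rabs (integ_cube n (fun x => tr (dotZR p x))) <= (2 * PI) ^ n / (1 + maxabs p) ^ L.
Proof.
  intros Htr Hp. pose proof two_PI_pos. pose proof (maxabs_nonneg p).
  assert (0 <= (2 * PI) ^ n / (1 + maxabs p) ^ L)
    by (apply Rmult_le_pos; [apply pow_le|left; apply Rinv_0_lt_compat, pow_lt]; lra).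
  destruct (integ_cube_trig_dot n p Hp) as [Hc Hs].
  destruct Htr as [->| ->]; [rewrite Hc|rewrite Hs, Rabs_R0; auto].
  destruct (all_zero p) eqn:E; [|rewrite Rabs_R0; auto].
  rewrite all_zero_maxabs, Rplus_0_r, pow1, Rdiv_1_r, Rabs_right by (auto; apply Rle_ge, pow_le; lra).
  lra.
Qed.

(** * Lattice sums *)

Lemma Rsum_app l1 l2 : Rsum (l1 ++ l2) = Rsum l1 + Rsum l2.
Proof. induction l1; simpl; [ring|rewrite IHl1; ring]. Qed.

Lemma Rsum_plus {A} (f g : A -> R) l :
  Rsum (map (fun m => f m + g m) l) = Rsum (map f l) + Rsum (map g l).
Proof. induction l; simpl; [ring|rewrite IHl; ring]. Qed.

Lemma Rsum_minus {A} (f g : A -> R) l :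
  Rsum (map (fun m => f m - g m) l) = Rsum (map f l) - Rsum (map g l).
Proof. induction l; simpl; [ring|rewrite IHl; ring]. Qed.

Lemma Rsum_scal {A} (f : A -> R) c l : Rsum (map (fun m => c * f m) l) = c * Rsum (map f l).
Proof. induction l; simpl; [ring|rewrite IHl; ring]. Qed.

Lemma Rsum_ext {A} (f g : A -> R) l :
  (forall m, In m l -> f m = g m) -> Rsum (map f l) = Rsum (map g l).
Proof. induction l; simpl; intros H; auto. rewrite H, IHl; auto. Qed.

Lemma Rsum_le {A} (f g : A -> R) l :
  (forall m, In m l -> f m <= g m) -> Rsum (map f l) <= Rsum (map g l).
Proof. induction l; simpl; intros H; [lra|]. apply Rplus_le_compat; auto. Qed.

Lemma Rsum_nonneg {A} (f : A -> R) l : (forall m, In m l -> 0 <= f m) -> 0 <= Rsum (map f l).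
Proof. induction l; simpl; intros H; [lra|]. apply Rplus_le_le_0_compat; auto. Qed.

Lemma Rsum_abs {A} (f : A -> R) l : Rabs (Rsum (map f l)) <= Rsum (map (fun m => Rabs (f m)) l).
Proof.
  induction l; simpl; [rewrite Rabs_R0; lra|].
  eapply Rle_trans; [apply Rabs_triang|]. lra.
Qed.

Lemma Rsum_filter {A} (f : A -> R) (P : A -> bool) l :
  Rsum (map f (filter P l)) = Rsum (map (fun m => if P m then f m else 0) l).
Proof. induction l; simpl; auto. destruct (P a); simpl; rewrite IHl; ring. Qed.

Lemma Rsum_flat_map_cons {A} (G : list A -> R) (Bx : list (list A)) (Rg : list A) :
  Rsum (map G (flat_map (fun z => map (cons z) Bx) Rg)) =
  Rsum (map (fun z => Rsum (map (fun m => G (z :: m)) Bx)) Rg).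
Proof. induction Rg; simpl; auto. rewrite map_app, Rsum_app, IHRg, map_map. reflexivity. Qed.

Lemma Rsum_comm {A B} (F : A -> B -> R) (l1 : list A) (l2 : list B) :
  Rsum (map (fun a => Rsum (map (fun b => F a b) l2)) l1) =
  Rsum (map (fun b => Rsum (map (fun a => F a b) l1)) l2).
Proof.
  induction l1; simpl.
  - induction l2; simpl; auto. rewrite <- IHl2. ring.
  - rewrite IHl1, <- Rsum_plus. reflexivity.
Qed.

Lemma Rsum_sq_le_sq_Rsum (l : list R) : (forall x, In x l -> 0 <= x) ->
  Rsum (map (fun x => x * x) l) <= Rsum l * Rsum l.
Proof.
  intros H. assert (Hl : 0 <= Rsum l).
  { rewrite <- (map_id l). apply Rsum_nonneg. auto. }
  induction l as [|a l IH]; simpl in *; [lra|].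
  assert (0 <= a) by auto. assert (0 <= Rsum l) by (rewrite <- (map_id l); apply Rsum_nonneg; auto).
  specialize (IH (fun x Hx => H x (or_intror Hx)) ltac:(auto)). nra.
Qed.

Definition int_range (K : nat) : list Z :=
  map (fun i => (Z.of_nat i - Z.of_nat K)%Z) (seq 0 (2 * K + 1)).

Lemma int_range_S K : int_range (S K) = (- Z.of_nat (S K))%Z :: int_range K ++ [Z.of_nat (S K)].
Proof.
  unfold int_range. replace (2 * S K + 1)%nat with (S ((2 * K + 1) + 1)) by lia.
  rewrite <- cons_seq, seq_app. simpl map. f_equal.
  rewrite map_app. f_equal.
  - rewrite <- seq_shift, map_map. apply map_ext. intros. rewrite Zpos_P_of_succ_nat. lia.
  - cbn [map]. f_equal. rewrite ?Zpos_P_of_succ_nat. lia.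
Qed.

Lemma Rsum_int_range_supported k K (H : Z -> R) : (k <= K)%nat ->
  (forall z, (Z.of_nat k < Z.abs z)%Z -> H z = 0) ->
  Rsum (map H (int_range K)) = Rsum (map H (int_range k)).
Proof.
  intros Hk Hz. induction K as [|K IH]; [replace k with 0%nat by lia; auto|].
  destruct (Nat.eq_dec k (S K)) as [->|]; auto.
  rewrite int_range_S. simpl. rewrite map_app, Rsum_app. simpl.
  rewrite !Hz, IH by lia. ring.
Qed.

Lemma Rsum_box_supported N : forall (G : list Z -> R) k K, (k <= K)%nat ->
  (forall m, G m <> 0 -> List.Forall (fun z => (Z.abs z <= Z.of_nat k)%Z) m) ->
  Rsum (map G (box N K)) = Rsum (map G (box N k)).
Proof.
  induction N as [|N IH]; intros G k K Hk HG; simpl; auto.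
  rewrite !Rsum_flat_map_cons.
  rewrite (Rsum_ext _ (fun z => Rsum (map (fun m => G (z :: m)) (box N k)))).
  2:{ intros z _. apply (IH (fun m => G (z :: m))); auto.
      intros m Hm. specialize (HG _ Hm). inversion HG; auto. }
  fold (int_range K) (int_range k). apply Rsum_int_range_supported; auto. intros z Hz.
  induction (box N k) as [|a l IHl]; simpl; auto. rewrite IHl.
  destruct (Req_dec (G (z :: a)) 0) as [E|E]; [rewrite E; ring|].
  specialize (HG _ E). inversion HG. lia.
Qed.

Lemma box_length N K m : In m (box N K) -> length m = N.
Proof.
  revert m; induction N as [|N IH]; simpl; intros m Hm.
  - destruct Hm as [<-|[]]; auto.
  - apply in_flat_map in Hm. destruct Hm as [z [_ Hz]]. apply in_map_iff in Hz.
    destruct Hz as [m' [<- Hm']]. simpl. f_equal. auto.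
Qed.

Lemma sqnormZ_nonneg m : (0 <= sqnormZ m)%Z.
Proof. induction m; simpl; nia. Qed.

Lemma sqnormZ_lt_coord_bound m k : (sqnormZ m < Z.of_nat k)%Z ->
  List.Forall (fun z => (Z.abs z <= Z.of_nat k)%Z) m.
Proof.
  induction m as [|a m IH]; simpl; intros H; constructor.
  - pose proof (sqnormZ_nonneg m). nia.
  - apply IH. nia.
Qed.

Lemma Rsum_ball_box N k K (f : list Z -> R) : (k <= K)%nat ->
  Rsum (map f (ball N k)) =
  Rsum (map (fun m => if Z.ltb (sqnormZ m) (Z.of_nat k) then f m else 0) (box N K)).
Proof.
  intros Hk. unfold ball. rewrite Rsum_filter. symmetry. apply Rsum_box_supported; auto.
  intros m Hm. destruct (Z.ltb_spec (sqnormZ m) (Z.of_nat k)); [apply sqnormZ_lt_coord_bound; auto|].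
  lra.
Qed.

Lemma Rsum_ball_S_minus N j K (f : list Z -> R) : (S j <= K)%nat ->
  Rsum (map f (ball N (S j))) - Rsum (map f (ball N j)) =
  Rsum (map (fun m => if Z.eqb (sqnormZ m) (Z.of_nat j) then f m else 0) (box N K)).
Proof.
  intros Hj. rewrite (Rsum_ball_box N (S j) K), (Rsum_ball_box N j K), <- Rsum_minus by lia.
  apply Rsum_ext. intros m _.
  destruct (Z.ltb_spec (sqnormZ m) (Z.of_nat (S j))), (Z.ltb_spec (sqnormZ m) (Z.of_nat j)),
    (Z.eqb_spec (sqnormZ m) (Z.of_nat j)); try ring; lia.
Qed.

Definition weight1 (z : Z) : R := / (1 + Rabs (IZR z)) ^ 2.

Lemma weight1_pos z : 0 < weight1 z.
Proof. unfold weight1. apply Rinv_0_lt_compat, pow_lt. pose proof (Rabs_pos (IZR z)). lra. Qed.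

(* [weight1] is dominated by the increments of the bounded increasing function [u / (1 + |u|)],
   so its sums over any range of consecutive integers are at most [4]. *)
Lemma weight1_le_increment (u : Z) :
  weight1 u <= 2 * ((IZR u + 1) / (1 + Rabs (IZR u + 1)) - IZR u / (1 + Rabs (IZR u))).
Proof.
  unfold weight1. destruct (Z_le_gt_dec 0 u) as [Hu|Hu].
  - apply IZR_le in Hu. rewrite !Rabs_right by lra. set (x := IZR u) in *.
    assert (0 <= x / ((x + 1) ^ 2 * (x + 2))).
    { apply Rmult_le_pos; auto. left. apply Rinv_0_lt_compat, Rmult_lt_0_compat; [apply pow_lt|]; lra. }
    replace (2 * ((x + 1) / (1 + (x + 1)) - x / (1 + x)))
      with (/ (1 + x) ^ 2 + x / ((x + 1) ^ 2 * (x + 2))) by (field; lra).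
    lra.
  - assert (Hu' : IZR u <= -1) by (apply IZR_le; lia).
    rewrite Rabs_left, (Rabs_left1 (IZR u + 1)) by lra. set (x := IZR u) in *.
    assert (0 <= (2 - x) / ((- x) * (1 - x) ^ 2)).
    { apply Rmult_le_pos; [lra|]. left. apply Rinv_0_lt_compat, Rmult_lt_0_compat; [|apply pow_lt]; lra. }
    replace (2 * ((x + 1) / (1 + - (x + 1)) - x / (1 + - x)))
      with (/ (1 + - x) ^ 2 + (2 - x) / ((- x) * (1 - x) ^ 2)) by (field; lra).
    lra.
Qed.

Lemma Rsum_weight1_consecutive L (a : Z) :
  Rsum (map (fun i => weight1 (Z.of_nat i + a)) (seq 0 L)) <= 4.
Proof.
  set (g := fun u => u / (1 + Rabs u)).
  assert (Hg : forall u, -1 <= g u <= 1).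
  { intros u. unfold g. pose proof (Rabs_pos u).
    split; apply Rmult_le_reg_r with (1 + Rabs u); try lra; unfold Rdiv;
      rewrite Rmult_assoc, Rinv_l by lra; unfold Rabs in *; destruct Rcase_abs; lra. }
  enough (Htel : Rsum (map (fun i => weight1 (Z.of_nat i + a)) (seq 0 L))
                 <= 2 * (g (IZR a + INR L) - g (IZR a))).
  { pose proof (Hg (IZR a + INR L)). pose proof (Hg (IZR a)). lra. }
  induction L as [|L IH]; [simpl; rewrite Rplus_0_r; lra|].
  rewrite seq_S, map_app, Rsum_app, S_INR. simpl. rewrite Rplus_0_r.
  pose proof (weight1_le_increment (Z.of_nat L + a)) as Hinc.
  rewrite plus_IZR, <- INR_IZR_INZ in Hinc. fold (g (INR L + IZR a + 1)) (g (INR L + IZR a)) in Hinc.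
  replace (IZR a + (INR L + 1)) with (INR L + IZR a + 1) by ring.
  replace (IZR a + INR L) with (INR L + IZR a) in IH by ring. lra.
Qed.

Fixpoint subZ (m n : list Z) : list Z :=
  match m, n with a :: m', b :: n' => (a - b)%Z :: subZ m' n' | _, _ => nil end.

Lemma subZ_length m n : length m = length n -> length (subZ m n) = length m.
Proof. revert n; induction m; intros [|b n] H; simpl in *; auto; lia. Qed.

Lemma dotZR_subZ m n x : length m = length x -> length n = length x ->
  dotZR m x - dotZR n x = dotZR (subZ m n) x.
Proof.
  revert m n; induction x as [|t x IH]; intros [|a m] [|b n] Hm Hn; simpl in *; try lia.
  - unfold dotZR; simpl; ring.
  - rewrite !dotZR_cons, <- IH, minus_IZR by lia. ring.
Qed.

Lemma l1_dist_subZ m n : length m = length n ->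
  l1_dist (map IZR m) (map IZR n) <= INR (length m) * maxabs (subZ m n).
Proof.
  revert n; induction m as [|a m IH]; intros [|b n] H; simpl in H; try lia; [simpl; lra|].
  specialize (IH n ltac:(lia)).
  change (l1_dist (map IZR (a :: m)) (map IZR (b :: n)))
    with (Rabs (IZR a - IZR b) + l1_dist (map IZR m) (map IZR n)).
  change (maxabs (subZ (a :: m) (b :: n))) with (Rmax (Rabs (IZR (a - b))) (maxabs (subZ m n))).
  change (length (a :: m)) with (S (length m)). rewrite S_INR, minus_IZR.
  pose proof (Rmax_l (Rabs (IZR a - IZR b)) (maxabs (subZ m n))).
  pose proof (Rmax_r (Rabs (IZR a - IZR b)) (maxabs (subZ m n))).
  pose proof (pos_INR (length m)). nra.
Qed.

Definition weight (p : list Z) : R := fold_right (fun z acc => weight1 z * acc) 1 p.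

Lemma weight_pos p : 0 < weight p.
Proof. induction p; simpl; [lra|]. apply Rmult_lt_0_compat; auto. apply weight1_pos. Qed.

Lemma Rsum_box_weight N : forall n K, length n = N ->
  Rsum (map (fun m => weight (subZ m n)) (box N K)) <= 4 ^ N.
Proof.
  induction N as [|N IH]; intros [|b n] K Hn; simpl in Hn; try lia; [simpl; lra|].
  simpl box. rewrite Rsum_flat_map_cons. fold (int_range K). simpl.
  rewrite (Rsum_ext _ (fun z => weight1 (z - b) * Rsum (map (fun m => weight (subZ m n)) (box N K))))
    by (intros; rewrite <- Rsum_scal; reflexivity).
  apply Rle_trans with (Rsum (map (fun z => 4 ^ N * weight1 (z - b)) (int_range K))).
  - apply Rsum_le. intros z _. rewrite Rmult_comm.
    apply Rmult_le_compat_r; [left; apply weight1_pos|]. apply IH. lia.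
  - rewrite Rsum_scal, (Rmult_comm 4). apply Rmult_le_compat_l; [apply pow_le; lra|].
    unfold int_range. rewrite map_map.
    rewrite (Rsum_ext _ (fun i => weight1 (Z.of_nat i + (- Z.of_nat K - b)))) by (intros; f_equal; lia).
    apply Rsum_weight1_consecutive.
Qed.

Lemma inv_maxabs_pow_le_weight p : / (1 + maxabs p) ^ (2 * length p) <= weight p.
Proof.
  induction p as [|a p IH]; [simpl; lra|].
  change (weight (a :: p)) with (weight1 a * weight p).
  change (maxabs (a :: p)) with (Rmax (Rabs (IZR a)) (maxabs p)).
  change (length (a :: p)) with (S (length p)).
  pose proof (maxabs_nonneg p). pose proof (Rabs_pos (IZR a)).
  set (Q := Rmax (Rabs (IZR a)) (maxabs p)).
  assert (HQ1 : Rabs (IZR a) <= Q) by apply Rmax_l.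
  assert (HQ2 : maxabs p <= Q) by apply Rmax_r.
  replace (2 * S (length p))%nat with (2 + 2 * length p)%nat by lia.
  rewrite pow_add, Rinv_mult.
  apply Rmult_le_compat; try (left; apply Rinv_0_lt_compat, pow_lt; lra).
  - unfold weight1. apply Rinv_le_contravar; [apply pow_lt; lra|apply pow_incr; lra].
  - eapply Rle_trans; [|apply IH]. apply Rinv_le_contravar; [apply pow_lt; lra|apply pow_incr; lra].
Qed.

(** * The Fourier coefficients of Theta_j *)

Lemma lip_bounded_Rsum {A} n (f : A -> list R -> R) Kf Bf l :
  (forall m, In m l -> lip_bounded n (f m) (Kf m) (Bf m)) ->
  lip_bounded n (fun x => Rsum (map (fun m => f m x) l)) (Rsum (map Kf l)) (Rsum (map Bf l)).
Proof.
  induction l as [|a l IH]; simpl; intros H.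
  - pose proof (lip_bounded_const n 0) as H0. rewrite Rabs_R0 in H0. exact H0.
  - apply lip_bounded_plus; auto.
Qed.

Lemma integ_cube_Rsum {A} n (f : A -> list R -> R) Kf Bf l :
  (forall m, In m l -> lip_bounded n (f m) (Kf m) (Bf m)) ->
  integ_cube n (fun x => Rsum (map (fun m => f m x) l)) = Rsum (map (fun m => integ_cube n (f m)) l).
Proof.
  induction l as [|a l IH]; simpl; intros H; [apply integ_cube_zero|].
  rewrite (integ_cube_plus _ _ _ _ _ _ _ (H a (or_introl eq_refl))
             (lip_bounded_Rsum n f Kf Bf l (fun m Hm => H m (or_intror Hm)))).
  rewrite IH; auto.
Qed.

Definition fourier_const (N : nat) : R := / (2 * PI) ^ N.

Lemma fourier_const_pos N : 0 < fourier_const N.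
Proof. apply Rinv_0_lt_compat, pow_lt, two_PI_pos. Qed.

Definition sphere_sum N K (b : list Z -> R) (j : nat) : R :=
  Rsum (map (fun m => if Z.eqb (sqnormZ m) (Z.of_nat j) then b m else 0) (box N K)).

Lemma Csum_Cexpi_fst l x :
  fst (Csum (map (fun m => Cexpi (dotZR m x)) l)) = Rsum (map (fun m => cos (dotZR m x)) l).
Proof. induction l; simpl; auto. rewrite <- IHl. reflexivity. Qed.

Lemma Csum_Cexpi_snd l x :
  snd (Csum (map (fun m => Cexpi (dotZR m x)) l)) = Rsum (map (fun m => sin (dotZR m x)) l).
Proof. induction l; simpl; auto. rewrite <- IHl. reflexivity. Qed.

Lemma Theta_Cexpi_fst N phi1 j n x :
  fst (Cmul (Theta N phi1 j x) (Cexpi (- dotZR n x))) =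
  fourier_const N * psi phi1 x *
  (Rsum (map (fun m => cos (dotZR m x - dotZR n x)) (ball N (S j))) -
   Rsum (map (fun m => cos (dotZR m x - dotZR n x)) (ball N j))).
Proof.
  unfold Theta, theta_k, theta, Csub, Cscal, Cmul. simpl.
  rewrite !Csum_Cexpi_fst, !Csum_Cexpi_snd, cos_neg, sin_neg.
  rewrite !(Rsum_ext (fun m => cos (dotZR m x - dotZR n x))
     (fun m => cos (dotZR n x) * cos (dotZR m x) + sin (dotZR n x) * sin (dotZR m x)))
    by (intros; rewrite cos_minus; ring).
  rewrite !Rsum_plus, !Rsum_scal. unfold fourier_const. ring.
Qed.

Lemma Theta_Cexpi_snd N phi1 j n x :
  snd (Cmul (Theta N phi1 j x) (Cexpi (- dotZR n x))) =
  fourier_const N * psi phi1 x *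
  (Rsum (map (fun m => sin (dotZR m x - dotZR n x)) (ball N (S j))) -
   Rsum (map (fun m => sin (dotZR m x - dotZR n x)) (ball N j))).
Proof.
  unfold Theta, theta_k, theta, Csub, Cscal, Cmul. simpl.
  rewrite !Csum_Cexpi_fst, !Csum_Cexpi_snd, cos_neg, sin_neg.
  rewrite !(Rsum_ext (fun m => sin (dotZR m x - dotZR n x))
     (fun m => cos (dotZR n x) * sin (dotZR m x) - sin (dotZR n x) * cos (dotZR m x)))
    by (intros; rewrite sin_minus; ring).
  rewrite !Rsum_minus, !Rsum_scal. unfold fourier_const. ring.
Qed.

Lemma integ_cube_sphere_sum N tr phi1 Kp Bp n j K : wave tr -> lip_bounded N (psi phi1) Kp Bp ->
  length n = N -> (S j <= K)%nat ->
  integ_cube N (fun x => fourier_const N * psi phi1 x *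
    (Rsum (map (fun m => tr (dotZR m x - dotZR n x)) (ball N (S j))) -
     Rsum (map (fun m => tr (dotZR m x - dotZR n x)) (ball N j))))
  = sphere_sum N K (fun m => fourier_const N *
      integ_cube N (fun x => psi phi1 x * tr (dotZR (subZ m n) x))) j.
Proof.
  intros Htr Hpsi Hn Hj. set (c := fourier_const N).
  set (a := fun m => if Z.eqb (sqnormZ m) (Z.of_nat j) then c else 0).
  assert (Hlip : forall m, In m (box N K) ->
            lip_bounded N (fun x => psi phi1 x * tr (dotZR (subZ m n) x))
              (Bp * l1_normZ (subZ m n) + 1 * Kp) (Bp * 1)).
  { intros m Hm. apply lip_bounded_mult; [exact Hpsi|]. apply Htr.
    apply box_length in Hm. rewrite subZ_length; lia. }
  rewrite (integ_cube_ext N _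
    (fun x => Rsum (map (fun m => a m * (psi phi1 x * tr (dotZR (subZ m n) x))) (box N K)))).
  - rewrite (integ_cube_Rsum N _ (fun m => Rabs (a m) * (Bp * l1_normZ (subZ m n) + 1 * Kp))
               (fun m => Rabs (a m) * (Bp * 1)) _
               (fun m Hm => lip_bounded_scal _ _ _ _ (a m) (Hlip m Hm))).
    apply Rsum_ext. intros m Hm. rewrite (integ_cube_scal _ _ _ _ _ (Hlip m Hm)).
    unfold a. destruct Z.eqb; ring.
  - intros x Hx. rewrite Rmult_assoc, (Rsum_ball_S_minus N j K), <- !Rsum_scal by auto.
    apply Rsum_ext. intros m Hm. apply box_length in Hm.
    rewrite dotZR_subZ by lia. unfold a. destruct Z.eqb; ring.
Qed.

Definition psi_fourier_cos phi1 N p := integ_cube N (fun x => psi phi1 x * cos (dotZR p x)).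
Definition psi_fourier_sin phi1 N p := integ_cube N (fun x => psi phi1 x * sin (dotZR p x)).

Lemma Theta_coef_sphere_sum N phi1 Kp Bp j n K : lip_bounded N (psi phi1) Kp Bp ->
  length n = N -> (S j <= K)%nat ->
  Theta_coef N phi1 j n =
  (fourier_const N * sphere_sum N K (fun m => fourier_const N * psi_fourier_cos phi1 N (subZ m n)) j,
   fourier_const N * sphere_sum N K (fun m => fourier_const N * psi_fourier_sin phi1 N (subZ m n)) j).
Proof.
  intros Hpsi Hn Hj. unfold Theta_coef. cbv zeta. unfold Cscal at 1. cbn [fst snd]. f_equal; f_equal.
  - rewrite (integ_cube_ext N _ _ (fun x _ => Theta_Cexpi_fst N phi1 j n x)).
    apply integ_cube_sphere_sum with (Kp := Kp) (Bp := Bp); auto using wave_cos.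
  - rewrite (integ_cube_ext N _ _ (fun x _ => Theta_Cexpi_snd N phi1 j n x)).
    apply integ_cube_sphere_sum with (Kp := Kp) (Bp := Bp); auto using wave_sin.
Qed.

Definition in_shell (k : nat) (m : list Z) : R :=
  if Rle_dec (INR k) (euclid_normZ m) then if Rlt_dec (euclid_normZ m) (INR k + 1) then 1 else 0
  else 0.

Lemma dist_norm_le_of_shell n m k : length m = length n ->
  INR k <= euclid_normZ m < INR k + 1 ->
  1 + Rabs (euclid_normZ n - INR k) <= (INR (length n) + 2) * (1 + maxabs (subZ m n)).
Proof.
  intros Hl [Hk1 Hk2]. pose proof (maxabs_nonneg (subZ m n)). pose proof (pos_INR (length n)).
  assert (Hmn : Rabs (euclid_normZ n - euclid_normZ m) <= INR (length n) * maxabs (subZ m n)).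
  { rewrite Rabs_minus_sym. unfold euclid_normZ.
    eapply Rle_trans; [apply euclid_norm_lipschitz; rewrite !length_map; auto|].
    rewrite <- Hl. apply l1_dist_subZ. auto. }
  assert (Rabs (euclid_normZ n - INR k)
          <= Rabs (euclid_normZ n - euclid_normZ m) + Rabs (euclid_normZ m - INR k)).
  { replace (euclid_normZ n - INR k)
      with ((euclid_normZ n - euclid_normZ m) + (euclid_normZ m - INR k)) by ring.
    apply Rabs_triang. }
  rewrite (Rabs_right (euclid_normZ m - INR k)) in * by lra. nra.
Qed.

Lemma shell_term_bound N n m k l A E : length n = N -> length m = N -> 0 <= E ->
  Rabs A <= E / (1 + maxabs (subZ m n)) ^ (2 * N + l) ->
  in_shell k m * Rabs A
  <= E * (INR N + 2) ^ l / (1 + Rabs (euclid_normZ n - INR k)) ^ l * weight (subZ m n).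
Proof.
  intros Hn Hm HE HA. set (p := subZ m n) in *. set (Q := maxabs p).
  set (d := Rabs (euclid_normZ n - INR k)).
  pose proof (maxabs_nonneg p). pose proof (Rabs_pos (euclid_normZ n - INR k)).
  pose proof (weight_pos p). pose proof (pos_INR N).
  assert (HdQ : 0 < (1 + d) ^ l) by (apply pow_lt; unfold d; lra).
  assert (HQ : 0 < (1 + Q) ^ l) by (apply pow_lt; unfold Q; lra).
  unfold in_shell. destruct Rle_dec as [Hlo|Hlo]; [destruct Rlt_dec as [Hhi|Hhi]|];
    [|rewrite Rmult_0_l; apply Rmult_le_pos; [apply Rmult_le_pos; [apply Rmult_le_pos;
        [|apply pow_le]|left; apply Rinv_0_lt_compat]|]; lra..].
  rewrite Rmult_1_l.
  assert (Hw : / (1 + Q) ^ (2 * N) <= weight p).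
  { pose proof (inv_maxabs_pow_le_weight p) as Hw. unfold p in Hw |- *.
    rewrite subZ_length, Hm in Hw by lia. auto. }
  assert (Hd : / (1 + Q) ^ l <= (INR N + 2) ^ l * / (1 + d) ^ l).
  { apply Rmult_le_reg_r with ((1 + d) ^ l * (1 + Q) ^ l); [nra|].
    replace ((INR N + 2) ^ l * / (1 + d) ^ l * ((1 + d) ^ l * (1 + Q) ^ l))
      with (((INR N + 2) * (1 + Q)) ^ l) by (rewrite Rpow_mult_distr; field; lra).
    replace (/ (1 + Q) ^ l * ((1 + d) ^ l * (1 + Q) ^ l)) with ((1 + d) ^ l) by (field; lra).
    apply pow_incr. split; [unfold d; lra|].
    rewrite <- Hn. apply dist_norm_le_of_shell; [lia|split; auto]. }
  eapply Rle_trans; [exact HA|]. rewrite pow_add. unfold Rdiv. rewrite Rinv_mult.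
  assert (0 <= / (1 + Q) ^ (2 * N)) by (left; apply Rinv_0_lt_compat, pow_lt; unfold Q; lra).
  assert (0 <= / (1 + Q) ^ l) by (left; apply Rinv_0_lt_compat; auto).
  apply Rle_trans with (E * (weight p * ((INR N + 2) ^ l * / (1 + d) ^ l))); [|right; ring].
  apply Rmult_le_compat_l; [auto|]. apply Rmult_le_compat; auto.
Qed.

Lemma Rsum_eqb_le (S : list nat) t b : NoDup S -> 0 <= b ->
  Rsum (map (fun j => if Z.eqb t (Z.of_nat j) then b else 0) S) <=
  (if existsb (fun j => Z.eqb t (Z.of_nat j)) S then b else 0).
Proof.
  induction S as [|a S IH]; intros HS Hb; simpl; [lra|].
  inversion HS as [|? ? Ha HS']; subst.
  destruct (Z.eqb_spec t (Z.of_nat a)); simpl; [|specialize (IH HS' Hb); lra].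
  rewrite (Rsum_ext _ (fun _ => 0)).
  - enough (Rsum (map (fun _ : nat => 0) S) = 0) by lra.
    clear. induction S; simpl; [auto|rewrite IHS; ring].
  - intros j Hj. destruct (Z.eqb_spec t (Z.of_nat j)); auto.
    exfalso. assert (j = a) by lia. subst; auto.
Qed.

Lemma sqsum_IZR m : sqsum (map IZR m) = IZR (sqnormZ m).
Proof. induction m; simpl; auto. rewrite IHm, plus_IZR, mult_IZR. reflexivity. Qed.

Lemma Rsum_shell_sphere_le k m b : 0 <= b ->
  Rsum (map (fun j => if Z.eqb (sqnormZ m) (Z.of_nat j) then b else 0) (shell k)) <= in_shell k m * b.
Proof.
  intros Hb. eapply Rle_trans; [apply Rsum_eqb_le; [apply NoDup_filter, seq_NoDup|auto]|].
  destruct existsb eqn:E; [|unfold in_shell; destruct Rle_dec; [destruct Rlt_dec|]; lra].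
  apply existsb_exists in E. destruct E as [j [Hj Hmj]].
  apply Z.eqb_eq in Hmj. apply filter_In in Hj. destruct Hj as [_ Hj].
  assert (En : euclid_normZ m = sqrt (INR j)).
  { unfold euclid_normZ. rewrite euclid_norm_sqsum, sqsum_IZR, Hmj, <- INR_IZR_INZ. reflexivity. }
  unfold in_shell. rewrite En.
  destruct (Rle_dec (INR k) (sqrt (INR j))); [|discriminate].
  destruct (Rlt_dec (sqrt (INR j)) (INR k + 1)); [lra|discriminate].
Qed.

Lemma shell_lt k j : In j (shell k) -> (j < (k + 1) * (k + 1))%nat.
Proof. intros H. apply filter_In in H. destruct H as [H _]. apply in_seq in H. lia. Qed.

Lemma Rsum_shell_sphere_sum N K k n (b : list Z -> R) C : length n = N -> 0 <= C ->
  (forall m, 0 <= b m) -> (forall m, In m (box N K) -> in_shell k m * b m <= C * weight (subZ m n)) ->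
  Rsum (map (sphere_sum N K b) (shell k)) <= C * 4 ^ N.
Proof.
  intros Hn HC Hb Hm. unfold sphere_sum. rewrite Rsum_comm.
  apply Rle_trans with (Rsum (map (fun m => C * weight (subZ m n)) (box N K))).
  - apply Rsum_le. intros m Hin. eapply Rle_trans; [apply Rsum_shell_sphere_le|]; auto.
  - rewrite Rsum_scal. apply Rmult_le_compat_l; auto. apply Rsum_box_weight. auto.
Qed.

Lemma Rsum_shell_sphere_sum_decay N K k l n (f : list Z -> R) E c :
  length n = N -> 0 <= E -> 0 <= c ->
  (forall p, length p = N -> Rabs (f p) <= E / (1 + maxabs p) ^ (2 * N + l)) ->
  Rsum (map (sphere_sum N K (fun m => c * Rabs (f (subZ m n)))) (shell k))
  <= c * (E * (INR N + 2) ^ l) / (1 + Rabs (euclid_normZ n - INR k)) ^ l * 4 ^ N.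
Proof.
  intros Hn HE Hc Hf. pose proof (Rabs_pos (euclid_normZ n - INR k)). pose proof (pos_INR N).
  apply Rsum_shell_sphere_sum with (n := n); auto.
  - repeat apply Rmult_le_pos; auto; try (apply pow_le; lra).
    left. apply Rinv_0_lt_compat, pow_lt. lra.
  - intros m. apply Rmult_le_pos; auto using Rabs_pos.
  - intros m Hm. apply box_length in Hm.
    replace (in_shell k m * (c * Rabs (f (subZ m n)))) with (c * (in_shell k m * Rabs (f (subZ m n))))
      by ring.
    unfold Rdiv. rewrite !Rmult_assoc. apply Rmult_le_compat_l; [auto|].
    rewrite <- !Rmult_assoc. apply shell_term_bound; auto.
    apply Hf. rewrite subZ_length; lia.
Qed.

Lemma Rabs_sphere_sum_le N K f j : Rabs (sphere_sum N K f j) <= sphere_sum N K (fun m => Rabs (f m)) j.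
Proof.
  unfold sphere_sum. eapply Rle_trans; [apply Rsum_abs|]. apply Rsum_le. intros m _.
  destruct Z.eqb; [lra|rewrite Rabs_R0; lra].
Qed.

Lemma sphere_sum_nonneg N K f j : (forall m, 0 <= f m) -> 0 <= sphere_sum N K f j.
Proof. intros Hf. apply Rsum_nonneg. intros m _. destruct Z.eqb; auto; lra. Qed.

Lemma Cnorm2_Theta_coef_le N phi1 Kp Bp j n K : lip_bounded N (psi phi1) Kp Bp ->
  length n = N -> (S j <= K)%nat ->
  Cnorm2 (Theta_coef N phi1 j n) <= fourier_const N ^ 2 *
    (sphere_sum N K (fun m => fourier_const N * Rabs (psi_fourier_cos phi1 N (subZ m n))) j ^ 2 +
     sphere_sum N K (fun m => fourier_const N * Rabs (psi_fourier_sin phi1 N (subZ m n))) j ^ 2).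
Proof.
  intros Hpsi Hn Hj. rewrite (Theta_coef_sphere_sum N phi1 Kp Bp j n K) by auto.
  pose proof (fourier_const_pos N) as Hc.
  assert (Hsq : forall f, (sphere_sum N K (fun m => fourier_const N * f m) j) ^ 2 <=
            (sphere_sum N K (fun m => fourier_const N * Rabs (f m)) j) ^ 2).
  { intros f. rewrite <- (pow2_abs (sphere_sum N K _ j)). apply pow_incr. split; [apply Rabs_pos|].
    eapply Rle_trans; [apply Rabs_sphere_sum_le|]. right. unfold sphere_sum. apply Rsum_ext.
    intros m _. rewrite Rabs_mult, Rabs_right by lra. reflexivity. }
  unfold Cnorm2. simpl. pose proof (Hsq (fun p => psi_fourier_cos phi1 N (subZ p n))).
  pose proof (Hsq (fun p => psi_fourier_sin phi1 N (subZ p n))). simpl in *.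
  assert (0 <= fourier_const N ^ 2) by (apply pow_le; lra). nra.
Qed.

Lemma Rsum_sum_sq_le {A} (x y : A -> R) l S : (forall j, 0 <= x j) -> (forall j, 0 <= y j) ->
  Rsum (map x l) <= S -> Rsum (map y l) <= S ->
  Rsum (map (fun j => x j ^ 2 + y j ^ 2) l) <= 2 * S ^ 2.
Proof.
  intros Hx Hy HSx HSy. rewrite Rsum_plus.
  assert (Hsq : forall z : A -> R, (forall j, 0 <= z j) -> Rsum (map z l) <= S ->
            Rsum (map (fun j => z j ^ 2) l) <= S ^ 2).
  { intros z Hz HS. pose proof (Rsum_sq_le_sq_Rsum (map z l)) as Q. rewrite map_map in Q.
    assert (0 <= Rsum (map z l)) by (apply Rsum_nonneg; auto).
    rewrite (Rsum_ext _ (fun j => z j * z j)) by (intros; ring).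
    eapply Rle_trans; [apply Q|].
    - intros t Ht. apply in_map_iff in Ht. destruct Ht as [j [<- _]]. auto.
    - simpl. nra. }
  pose proof (Hsq x Hx HSx). pose proof (Hsq y Hy HSy). lra.
Qed.

(** * The radial cut-off *)

Section Profile.

Variables (phi1 : R -> R) (F : nat -> R -> R) (d1 d2 : R).
Hypothesis Hd1 : 0 < d1.
Hypothesis Hd12 : d1 <= d2.
Hypothesis HF0 : forall t, F 0%nat t = phi1 t.
Hypothesis HF : forall k t, 0 < t -> derivable_pt_lim (F k) t (F (S k) t).
Hypothesis Hlow : forall t, 0 <= t <= d1 -> phi1 t = 1.
Hypothesis Hhigh : forall t, d2 < t -> phi1 t = 0.
Hypothesis Hrange : forall t, 0 <= t -> 0 <= phi1 t <= 1.

Lemma profile_deriv_high j t : d2 < t -> F j t = 0.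
Proof.
  revert t; induction j as [|j IH]; intros t Ht; [rewrite HF0; auto|].
  apply (derivable_pt_lim_locally_const (F j) t d2 (t + 1) 0); [lra| |apply HF; lra].
  intros; apply IH; lra.
Qed.

Lemma profile_deriv_low j t : 0 < t < d1 -> F j t = const1_deriv j.
Proof.
  revert t; induction j as [|j IH]; intros t Ht; [rewrite HF0; simpl; apply Hlow; lra|].
  apply (derivable_pt_lim_locally_const (F j) t 0 d1 (const1_deriv j)); [lra| |apply HF; lra].
  intros; apply IH; lra.
Qed.

(* The derivatives of [s => phi1 (sqrt s)], which is constant near [0] and hence smooth
   on all of [R] once extended by [1] to [s <= 0]. *)
Definition phi_sqrt_deriv_pos (k : nat) (s : R) : R := dexpr_eval F sqrt_deriv (chain_deriv k) s.

Definition phi_sqrt_deriv (k : nat) (s : R) : R :=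
  if Rle_dec s 0 then const1_deriv k else phi_sqrt_deriv_pos k s.

Lemma phi_sqrt_deriv_pos_derivable k s : 0 < s ->
  derivable_pt_lim (phi_sqrt_deriv_pos k) s (phi_sqrt_deriv_pos (S k) s).
Proof.
  intros Hs. apply dexpr_eval_deriv.
  - intros j. apply HF, sqrt_lt_R0; auto.
  - intros i. apply sqrt_deriv_derivable; auto.
Qed.

Lemma phi_sqrt_deriv_low k s : s < d1 * d1 -> phi_sqrt_deriv k s = const1_deriv k.
Proof.
  intros Hs. unfold phi_sqrt_deriv. destruct Rle_dec; auto.
  assert (Hq : 0 < sqrt s < d1)
    by (split; [apply sqrt_lt_R0; lra|apply sqrt_lt_of_lt_sq; lra]).
  destruct k as [|k].
  - apply profile_deriv_low. auto.
  - apply dexpr_eval_divisible with (P := fun j => (1 <= j)%nat);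
      [|apply chain_deriv_divisible_pos; lia].
    intros [|j] Hj; [lia|]. apply (profile_deriv_low (S j)). auto.
Qed.

Lemma phi_sqrt_deriv_high k s : d2 * d2 < s -> phi_sqrt_deriv k s = 0.
Proof.
  intros Hs. unfold phi_sqrt_deriv. destruct Rle_dec; [nra|].
  apply dexpr_eval_divisible with (P := fun _ => True); [|apply chain_deriv_divisible].
  intros j _. apply profile_deriv_high, lt_sqrt_of_sq_lt; lra.
Qed.

Lemma phi_sqrt_deriv_derivable k s : derivable_pt_lim (phi_sqrt_deriv k) s (phi_sqrt_deriv (S k) s).
Proof.
  destruct (Rlt_dec s (d1 * d1)).
  - rewrite phi_sqrt_deriv_low by auto.
    apply (derivable_pt_lim_locally_ext (fun _ => const1_deriv k) _ s (s - 1) (d1 * d1));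
      [lra| |apply derivable_pt_lim_const].
    intros z Hz. symmetry. apply phi_sqrt_deriv_low. lra.
  - assert (Hs : 0 < s) by nra. unfold phi_sqrt_deriv at 2. destruct Rle_dec; [lra|].
    apply (derivable_pt_lim_locally_ext (phi_sqrt_deriv_pos k) _ s 0 (s + 1));
      [lra| |apply phi_sqrt_deriv_pos_derivable; auto].
    intros z Hz. unfold phi_sqrt_deriv. destruct Rle_dec; [lra|reflexivity].
Qed.

Lemma phi_sqrt_deriv_bounded k : exists M, 0 <= M /\ forall s, Rabs (phi_sqrt_deriv k s) <= M.
Proof.
  destruct (continuity_ab_maj (fun s => Rabs (phi_sqrt_deriv_pos k s)) (d1 * d1) (d2 * d2))
    as [s0 [HM _]]; [nra| |].
  { intros c Hc. apply (continuity_pt_comp (phi_sqrt_deriv_pos k) Rabs); [|apply Rcontinuity_abs].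
    apply derivable_continuous_pt. exists (phi_sqrt_deriv_pos (S k) c).
    apply phi_sqrt_deriv_pos_derivable. nra. }
  pose proof (Rabs_pos (phi_sqrt_deriv_pos k s0)).
  exists (1 + Rabs (phi_sqrt_deriv_pos k s0)). split; [lra|]. intros s.
  destruct (Rlt_dec s (d1 * d1)); [|destruct (Rlt_dec (d2 * d2) s)].
  - rewrite phi_sqrt_deriv_low by auto. destruct k; simpl; rewrite ?Rabs_R1, ?Rabs_R0; lra.
  - rewrite phi_sqrt_deriv_high, Rabs_R0 by auto. lra.
  - unfold phi_sqrt_deriv. destruct Rle_dec; [nra|]. specialize (HM s ltac:(lra)). lra.
Qed.

Definition phi_sqrt_deriv_sup (k : nat) : R :=
  proj1_sig (constructive_indefinite_description _ (phi_sqrt_deriv_bounded k)).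

Lemma phi_sqrt_deriv_sup_spec k :
  0 <= phi_sqrt_deriv_sup k /\ forall s, Rabs (phi_sqrt_deriv k s) <= phi_sqrt_deriv_sup k.
Proof. unfold phi_sqrt_deriv_sup. destruct constructive_indefinite_description; simpl; auto. Qed.

Lemma phi_sqrt_deriv_0 s : 0 <= s -> phi_sqrt_deriv 0 s = phi1 (sqrt s).
Proof.
  intros Hs. unfold phi_sqrt_deriv. destruct Rle_dec; [|apply HF0].
  replace s with 0 by lra. rewrite sqrt_0. symmetry. apply Hlow. lra.
Qed.

(* Derivatives of [s => phi1 (sqrt (a + (c + s) ^ 2))]: the radial profile along a line. *)
Definition slice_deriv (a c : R) (k : nat) (s : R) : R :=
  dexpr_eval phi_sqrt_deriv (sq_shift_deriv a c) (chain_deriv k) s.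

Definition slice_deriv_sup (k : nat) : R :=
  dexpr_bound phi_sqrt_deriv_sup (fun _ => d2 * d2 + 2 * d2 + 2) (chain_deriv k).

Lemma slice_deriv_derivable a c k s : derivable_pt_lim (slice_deriv a c k) s (slice_deriv a c (S k) s).
Proof.
  apply dexpr_eval_deriv; [intros; apply phi_sqrt_deriv_derivable|intros; apply sq_shift_deriv_derivable].
Qed.

Lemma slice_deriv_sup_nonneg k : 0 <= slice_deriv_sup k.
Proof.
  apply dexpr_bound_nonneg; [intros; apply phi_sqrt_deriv_sup_spec|intros; nra].
Qed.

Lemma slice_deriv_bound a c k s : 0 <= a -> Rabs (slice_deriv a c k s) <= slice_deriv_sup k.
Proof.
  intros Ha. destruct (Rlt_dec (d2 * d2) (a + (c + s) ^ 2)).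
  - unfold slice_deriv. rewrite (dexpr_eval_divisible (fun _ => True)), Rabs_R0;
      [apply slice_deriv_sup_nonneg| |apply chain_deriv_divisible].
    intros j _. apply phi_sqrt_deriv_high. auto.
  - apply dexpr_eval_bound; [intros; apply phi_sqrt_deriv_sup_spec|].
    assert (Hcs : - d2 <= c + s <= d2) by (split; nra).
    intros [|[|[|i]]]; unfold sq_shift_deriv; apply Rabs_le; split; nra.
Qed.

Lemma slice_deriv_0 a c s : 0 <= a -> slice_deriv a c 0 s = phi1 (sqrt (a + (c + s) ^ 2)).
Proof. intros Ha. apply phi_sqrt_deriv_0. pose proof (pow2_ge_0 (c + s)). lra. Qed.

Definition radial (x : list R) : R := phi1 (euclid_norm x).

Lemma radial_lipschitz_profile a b : 0 <= a -> 0 <= b ->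
  Rabs (phi1 a - phi1 b) <= slice_deriv_sup 1 * Rabs (a - b).
Proof.
  intros Ha Hb.
  assert (E : forall t, 0 <= t -> phi1 t = slice_deriv 0 0 0 t).
  { intros t Ht. rewrite slice_deriv_0 by lra. f_equal.
    replace (0 + (0 + t) ^ 2) with (t * t) by ring. rewrite sqrt_square; auto. }
  rewrite !E by auto. apply (derivable_lipschitz _ (slice_deriv 0 0 1)).
  - intros; apply slice_deriv_derivable.
  - intros; apply slice_deriv_bound; lra.
Qed.

Lemma lip_bounded_radial n : lip_bounded n radial (slice_deriv_sup 1) 1.
Proof.
  split; [apply slice_deriv_sup_nonneg|split].
  - intros x _. pose proof (Hrange _ (sqrt_pos (sqsum x))). apply Rabs_le. unfold radial. rewrite euclid_norm_sqsum. split; lra.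
  - intros x y Hx Hy. unfold radial.
    eapply Rle_trans; [apply radial_lipschitz_profile; apply sqrt_pos|].
    apply Rmult_le_compat_l; [apply slice_deriv_sup_nonneg|]. apply euclid_norm_lipschitz. lia.
Qed.

Lemma radial_vanish x i : (i < length x)%nat -> d2 < Rabs (nth i x 0) -> radial x = 0.
Proof.
  intros Hi Hx. apply Hhigh. rewrite euclid_norm_sqsum, <- (sqrt_Rsqr_abs (nth i x 0)) in *.
  eapply Rlt_le_trans; [apply Hx|]. apply sqrt_le_1_alt. apply sq_le_sqsum, nth_In. auto.
Qed.

Lemma radial_coord_diff_iter_bound i h L x : (i < length x)%nat ->
  Rabs (coord_diff_iter i h L radial x) <= Rabs h ^ L * slice_deriv_sup L.
Proof.
  intros Hi. destruct (sqsum_shift_coord i x Hi) as [a [Ha Hs]].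
  rewrite <- (shift_coord_0 i x) at 1. rewrite coord_diff_iter_shift_coord.
  apply (fdiff_iter_bound h L _ (slice_deriv a (nth i x 0))).
  - intros t. rewrite slice_deriv_0 by auto. unfold radial. rewrite euclid_norm_sqsum, Hs. reflexivity.
  - intros; apply slice_deriv_derivable.
  - intros; apply slice_deriv_bound; auto.
Qed.

Lemma fourier_radial_decay_large n tr p L : wave tr -> d2 < PI -> length p = n ->
  1 <= maxabs p -> INR L * PI < (PI - d2) * maxabs p ->
  Rabs (integ_cube n (fun x => radial x * tr (dotZR p x)))
  <= (2 * PI) ^ n * slice_deriv_sup L * (PI / (2 * maxabs p)) ^ L.
Proof.
  intros Htr Hd2 Hp HQ HLQ. pose proof PI_RGT_0.
  destruct (maxabs_attained p) as [i [Hi Hai]]; [destruct p; simpl in *; [lra|lia]|].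
  set (Q := maxabs p) in *. set (a := IZR (nth i p 0%Z)) in *.
  assert (Ha : a <> 0) by (intro E; rewrite E, Rabs_R0 in Hai; lra).
  set (h := PI / a).
  assert (Hh : Rabs h = PI / Q)
    by (unfold h, Rdiv; rewrite Rabs_mult, Rabs_inv, Hai, Rabs_right by lra; reflexivity).
  assert (Hah : a * h = PI) by (unfold h; field; auto).
  assert (HhPI : Rabs h <= PI).
  { rewrite Hh. apply Rmult_le_reg_r with Q; [lra|]. unfold Rdiv.
    rewrite Rmult_assoc, Rinv_l; nra. }
  assert (HLh : INR L * Rabs h < PI - d2).
  { rewrite Hh. apply Rmult_lt_reg_r with Q; [lra|]. unfold Rdiv.
    rewrite Rmult_assoc, Rmult_assoc, Rinv_l, Rmult_1_r by lra. lra. }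
  rewrite (integ_cube_coord_diff_iter_wave n tr p i h L radial d2 _ _ Htr Hp ltac:(lia) Hah HhPI HLh
             (lip_bounded_radial n)) by (intros; eapply radial_vanish; eauto).
  rewrite Rabs_mult, Rabs_right by (apply Rle_ge, pow_le; lra).
  eapply Rle_trans.
  { apply Rmult_le_compat_l; [apply pow_le; lra|]. apply integ_cube_bound
      with (K := 2 ^ L * 1 * l1_normZ p + 1 * (2 ^ L * slice_deriv_sup 1))
           (B := Rabs h ^ L * slice_deriv_sup L).
    apply lip_bounded_rebound with (B := (2 ^ L * 1) * 1).
    - apply lip_bounded_mult; [apply lip_bounded_coord_diff_iter, lip_bounded_radial|].
      apply (proj2 Htr n p Hp).
    - intros x Hx. rewrite Rabs_mult. rewrite <- (Rmult_1_r (Rabs h ^ L * _)).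
      apply Rmult_le_compat; try apply Rabs_pos.
      + apply radial_coord_diff_iter_bound. lia.
      + apply (proj2 Htr n p Hp). auto. }
  rewrite Hh. right. unfold Rdiv. rewrite !Rpow_mult_distr, !pow_inv, !Rpow_mult_distr. field.
  split; apply pow_nonzero; lra.
Qed.

Lemma fourier_radial_decay n tr L : wave tr -> d2 < PI ->
  exists D, 0 <= D /\ forall p, length p = n ->
    Rabs (integ_cube n (fun x => radial x * tr (dotZR p x))) <= D / (1 + maxabs p) ^ L.
Proof.
  intros Htr Hd2. pose proof PI_RGT_0. pose proof two_PI_pos.
  set (T := INR L * PI / (PI - d2) + 1).
  assert (HT : 1 <= T).
  { assert (0 <= INR L * PI / (PI - d2)); [|unfold T; lra].
    apply Rmult_le_pos; [pose proof (pos_INR L); nra|left; apply Rinv_0_lt_compat; lra]. }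
  set (M := slice_deriv_sup L). pose proof (slice_deriv_sup_nonneg L) as HM. fold M in HM.
  assert (HPn : 0 <= (2 * PI) ^ n) by (apply pow_le; lra).
  assert (HPL : 0 <= PI ^ L) by (apply pow_le; lra).
  exists ((2 * PI) ^ n * (M * PI ^ L + (1 + T) ^ L)). split.
  { apply Rmult_le_pos; auto. pose proof (pow_le (1 + T) L ltac:(lra)). nra. }
  intros p Hp. set (Q := maxabs p). pose proof (maxabs_nonneg p) as HQ. fold Q in HQ.
  pose proof (pow_lt (1 + Q) L ltac:(lra)) as HQL.
  apply Rmult_le_reg_r with ((1 + Q) ^ L); [auto|].
  unfold Rdiv. rewrite Rmult_assoc, Rinv_l, Rmult_1_r by lra.
  destruct (Rlt_dec Q T) as [HQT|HQT].
  - eapply Rle_trans.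
    { apply Rmult_le_compat_r; [lra|]. apply integ_cube_bound with (B := 1 * 1) (K := 1 * l1_normZ p + 1 * slice_deriv_sup 1).
      apply lip_bounded_mult; [apply lip_bounded_radial|apply (proj2 Htr n p Hp)]. }
    assert ((1 + Q) ^ L <= (1 + T) ^ L) by (apply pow_incr; lra).
    assert (0 <= M * PI ^ L) by nra. nra.
  - assert (HLQ : INR L * PI < (PI - d2) * Q).
    { apply Rmult_lt_reg_r with (/ (PI - d2)); [apply Rinv_0_lt_compat; lra|].
      replace ((PI - d2) * Q * / (PI - d2)) with Q by (field; lra). unfold T, Rdiv in HQT. lra. }
    eapply Rle_trans.
    { apply Rmult_le_compat_r; [lra|]. apply (fourier_radial_decay_large n tr p L Htr Hd2 Hp); [apply Rnot_lt_le in HQT; fold Q; lra|exact HLQ]. }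
    fold M Q. rewrite Rmult_assoc, <- Rpow_mult_distr.
    assert (PI / (2 * Q) * (1 + Q) <= PI).
    { apply Rmult_le_reg_r with (2 * Q); [lra|]. unfold Rdiv.
      replace (PI * / (2 * Q) * (1 + Q) * (2 * Q)) with (PI * (1 + Q)) by (field; lra). nra. }
    assert ((PI / (2 * Q) * (1 + Q)) ^ L <= PI ^ L).
    { apply pow_incr. split; [|auto]. apply Rmult_le_pos; [|lra].
      apply Rmult_le_pos; [lra|left; apply Rinv_0_lt_compat; lra]. }
    set (X := (PI / (2 * Q) * (1 + Q)) ^ L) in *. rewrite Rmult_assoc. apply Rmult_le_compat_l; [lra|].
    pose proof (pow_le (1 + T) L ltac:(lra)). nra.
Qed.

Lemma lip_bounded_psi n : lip_bounded n (psi phi1) (0 + slice_deriv_sup 1) (Rabs 1 + 1).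
Proof. exact (lip_bounded_minus _ _ _ _ _ _ _ (lip_bounded_const n 1) (lip_bounded_radial n)). Qed.

Lemma psi_fourier_decay n L : d2 < PI -> exists E, 0 <= E /\ forall p, length p = n ->
  Rabs (psi_fourier_cos phi1 n p) <= E / (1 + maxabs p) ^ L /\
  Rabs (psi_fourier_sin phi1 n p) <= E / (1 + maxabs p) ^ L.
Proof.
  intros Hd2.
  assert (Hone : forall tr, tr = cos \/ tr = sin -> exists E, 0 <= E /\ forall p, length p = n ->
            Rabs (integ_cube n (fun x => psi phi1 x * tr (dotZR p x))) <= E / (1 + maxabs p) ^ L).
  { intros tr Htr. assert (Hw : wave tr) by (destruct Htr as [->| ->]; [apply wave_cos|apply wave_sin]).
    destruct (fourier_radial_decay n tr L Hw Hd2) as [D [HD Hdec]].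
    exists ((2 * PI) ^ n + D). split; [pose proof (pow_le _ n (Rlt_le _ _ two_PI_pos)); lra|].
    intros p Hp. pose proof (proj2 Hw n p Hp) as Htrp.
    rewrite (integ_cube_ext n _ (fun x => tr (dotZR p x) - radial x * tr (dotZR p x)))
      by (intros; unfold psi, radial; ring).
    rewrite (integ_cube_minus _ _ _ _ _ _ _ Htrp (lip_bounded_mult _ _ _ _ _ _ _ (lip_bounded_radial n) Htrp)).
    eapply Rle_trans; [apply Rabs_triang|]. rewrite Rabs_Ropp.
    pose proof (integ_cube_trig_dot_bound n p L tr Htr Hp). pose proof (Hdec p Hp).
    unfold Rdiv in *. lra. }
  destruct (Hone cos (or_introl eq_refl)) as [Ec [HEc Hc]].
  destruct (Hone sin (or_intror eq_refl)) as [Es [HEs Hs]].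
  exists (Ec + Es). split; [lra|]. intros p Hp.
  assert (0 <= / (1 + maxabs p) ^ L)
    by (left; apply Rinv_0_lt_compat, pow_lt; pose proof (maxabs_nonneg p); lra).
  pose proof (Hc p Hp) as Hcp. pose proof (Hs p Hp) as Hsp.
  unfold Rdiv, psi_fourier_cos, psi_fourier_sin in *.
  split; [apply (Rle_trans _ _ _ Hcp)|apply (Rle_trans _ _ _ Hsp)]; apply Rmult_le_compat_r; lra.
Qed.

Lemma Theta_coef_shell_decay N l : d2 < PI -> exists C, forall (k : nat) (n : list Z), length n = N ->
  Rsum (map (fun j => Cnorm2 (Theta_coef N phi1 j n)) (shell k))
  <= C / (1 + Rabs (euclid_normZ n - INR k)) ^ l.
Proof.
  intros Hd2. destruct (psi_fourier_decay N (2 * N + l) Hd2) as [E [HE Hpsi]].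
  set (c := fourier_const N). pose proof (fourier_const_pos N) as Hc. fold c in Hc.
  set (S0 := c * (E * (INR N + 2) ^ l) * 4 ^ N).
  exists (2 * c ^ 2 * S0 ^ 2). intros k n Hn.
  set (d := Rabs (euclid_normZ n - INR k)). set (K := ((k + 1) * (k + 1))%nat).
  assert (Hd : 1 <= (1 + d) ^ l) by (apply pow_R1_Rle; unfold d; pose proof (Rabs_pos (euclid_normZ n - INR k)); lra).
  set (x := sphere_sum N K (fun m => c * Rabs (psi_fourier_cos phi1 N (subZ m n)))).
  set (y := sphere_sum N K (fun m => c * Rabs (psi_fourier_sin phi1 N (subZ m n)))).
  apply Rle_trans with (Rsum (map (fun j => c ^ 2 * (x j ^ 2 + y j ^ 2)) (shell k))).
  { apply Rsum_le. intros j Hj. apply (Cnorm2_Theta_coef_le N phi1 _ _ j n K (lip_bounded_psi N) Hn).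
    pose proof (shell_lt k j Hj). unfold K. lia. }
  assert (Hx : Rsum (map x (shell k)) <= S0 / (1 + d) ^ l).
  { eapply Rle_trans; [apply (Rsum_shell_sphere_sum_decay N K k l n _ E c); auto; try lra|].
    - intros p Hp. apply (Hpsi p Hp).
    - right. unfold S0, d, Rdiv. ring. }
  assert (Hy : Rsum (map y (shell k)) <= S0 / (1 + d) ^ l).
  { eapply Rle_trans; [apply (Rsum_shell_sphere_sum_decay N K k l n _ E c); auto; try lra|].
    - intros p Hp. apply (Hpsi p Hp).
    - right. unfold S0, d, Rdiv. ring. }
  rewrite Rsum_scal. eapply Rle_trans.
  { apply Rmult_le_compat_l; [apply pow_le; lra|].
    apply (Rsum_sum_sq_le x y (shell k) (S0 / (1 + d) ^ l)); auto;
      intros; apply sphere_sum_nonneg; intros; apply Rmult_le_pos; auto using Rabs_pos; lra. }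
  assert (0 <= c ^ 2 * S0 ^ 2) by (apply Rmult_le_pos; [apply pow_le; lra|apply pow2_ge_0]).
  apply Rmult_le_reg_r with ((1 + d) ^ l); [lra|]. unfold Rdiv.
  replace (c ^ 2 * (2 * (S0 * / (1 + d) ^ l) ^ 2) * (1 + d) ^ l)
    with (2 * (c ^ 2 * S0 ^ 2) * / (1 + d) ^ l) by (field; lra).
  rewrite (Rmult_assoc (2 * c ^ 2 * S0 ^ 2)), Rinv_l, Rmult_1_r by lra.
  assert (/ (1 + d) ^ l <= 1)
    by (apply Rmult_le_reg_r with ((1 + d) ^ l); [lra|]; rewrite Rinv_l; lra).
  set (u := c ^ 2 * S0 ^ 2) in *. set (v := / (1 + d) ^ l) in *.
  replace (2 * c ^ 2 * S0 ^ 2) with (2 * u) by (unfold u; ring). nra.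
Qed.

End Profile.

Lemma chi_sandwich_profile a b (phi1 : R -> R) : 0 <= a -> a <= b ->
  (forall t, 0 <= t -> chi a t <= phi1 t <= chi b t) ->
  (forall t, 0 <= t <= a -> phi1 t = 1) /\ (forall t, b < t -> phi1 t = 0) /\
  (forall t, 0 <= t -> 0 <= phi1 t <= 1).
Proof.
  intros Ha Hab Hchi. unfold chi in Hchi.
  split; [|split]; intros t Ht; assert (Ht0 : 0 <= t) by lra;
    destruct (Hchi t Ht0); destruct (Rle_dec t a), (Rle_dec t b); lra.
Qed.

Theorem lemma2 (N : nat) (r Rr : R) (phi1 : R -> R)
  (HN : (2 <= N)%nat) (Hr : 0 < r) (HrR : r < Rr) (HRpi : Rr <= PI)
  (Hsmooth : smooth_on (fun t => 0 < t) phi1)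
  (Hchi : forall t, 0 <= t ->
     chi ((Rr - r) / 3) t <= phi1 t <= chi (2 * (Rr - r) / 3) t) :
  forall l : nat, exists Cl : R,
    forall (k : nat) (n : list Z), length n = N ->
      Rsum (map (fun j => Cnorm2 (Theta_coef N phi1 j n)) (shell k))
        <= Cl / (1 + Rabs (euclid_normZ n - INR k)) ^ l.
Proof.
  intros l. destruct Hsmooth as [F [HF0 HF]].
  destruct (chi_sandwich_profile ((Rr - r) / 3) (2 * (Rr - r) / 3) phi1 ltac:(lra) ltac:(lra) Hchi)
    as (Hlow & Hhigh & Hrange).
  apply (Theta_coef_shell_decay phi1 F ((Rr - r) / 3) (2 * (Rr - r) / 3)); auto; lra.
Qed.
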